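(* Let $n\ge2$ and let $\underline\zeta=(\zeta_1,\dots,\zeta_n)\in\mathbb R^n$ be such that $1,\zeta_1,\dots,\zeta_n$ are linearly independent over $\mathbb Q$. (i) Unconditionally, $$w_{n,3}(\underline\zeta)\ge\frac{\widehat w_n(\underline\zeta)^2}{w_n(\underline\zeta)}.$$ (ii) Suppose that there are infinitely many $k$ such that the $n+1$ consecutive best approximations $v_k,v_{k+1},\dots,v_{k+n}$ for the linear form are linearly independent. Then $$w_{n,i}(\underline\zeta)\ge\frac{\widehat w_n(\underline\zeta)^{i-1}}{w_n(\underline\zeta)^{i-2}}\quad(1\le i\le n+1)$$ and $$w_n(\underline\zeta)\ge\widehat w_n(\underline\zeta)\left(\frac{\widehat w_n(\underline\zeta)-1}{n-1}\right)^{\frac1{n-1}}.$$ (iii) Dually and unconditionally, $$\lambda_{n,3}(\underline\zeta)\ge\frac{\widehat\lambda_n(\underline\zeta)^2}{\lambda_n(\underline\zeta)}.$$ (iv) If there are infinitely many $k$ such that $n+1$ consecutive simultaneous best approximations $u_k,\dots,u_{k+n}$ are linearly independent, then $$\lambda_{n,i}(\underline\zeta)\ge\frac{\widehat\lambda_n(\underline\zeta)^{i-1}}{\lambda_n(\underline\zeta)^{i-2}}\quad(1\le i\le n+1)$$ and $$\lambda_n(\underline\zeta)\ge\widehat\lambda_n(\underline\zeta)\left(\frac{(n-1)\widehat\lambda_n(\underline\zeta)}{1-\widehat\lambda_n(\underline\zeta)}\right)^{\frac1{n-1}}.$$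
   Context: For an integer vector $v=(x,y_1,\dots,y_n)\in\mathbb Z^{n+1}$ let $H(v)=\max\{|x|,|y_1|,\dots,|y_n|\}$. Linear form exponents. Let $L(v)=x+\zeta_1y_1+\dots+\zeta_ny_n$. For $1\le j\le n+1$: - $w_{n,j}(\underline\zeta)$ is the supremum of $\nu$ such that, for arbitrarily large $X$, the system $H(v)\le X$, $|L(v)|\le X^{-\nu}$ has $j$ linearly independent integer solutions $v$; - $\widehat w_{n,j}(\underline\zeta)$ is the same supremum with ''for all sufficiently large $X$'' in place of ''for arbitrarily large $X$''; - $w_n=w_{n,1}$ and $\widehat w_n=\widehat w_{n,1}$. Simultaneous approximation exponents. For $1\le j\le n+1$: - $\lambda_{n,j}(\underline\zeta)$ is the supremum of $\nu$ such that, for arbitrarily large $X$, the system $|x|\le X$, $\max_i|\zeta_ix-y_i|\le X^{-\nu}$ has $j$ linearly independent integer solutions $(x,y_1,\dots,y_n)$; - $\widehat\lambda_{n,j}$ is the same supremum with ''for all large $X$''; - $\lambda_n=\lambda_{n,1}$ and $\widehat\lambda_n=\widehat\lambda_{n,1}$. Best approximations. A best approximation for the linear form is a nonzero $v\in\mathbb Z^{n+1}$ such that every nonzero $u\in\mathbb Z^{n+1}$ with $H(u)<H(v)$ satisfies $|L(u)|>|L(v)|$. Up to sign, these form a sequence $v_1,v_2,\dots$ with nondecreasing heights and strictly decreasing $|L(v_k)|$. Simultaneous best approximations $u_1,u_2,\dots$ are defined analogously, using $|x|$ in place of $H$ and $\max_i|\zeta_ix-y_i|$ in place of $|L|$. 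*)

From Stdlib Require Import Reals QArith Qreals.
Open Scope R_scope.

Fixpoint rsum (f : nat -> R) (m : nat) : R :=
  match m with O => 0 | S p => rsum f p + f p end.

Fixpoint rmax (f : nat -> R) (m : nat) : R :=
  match m with O => 0 | S p => Rmax (rmax f p) (f p) end.

(* An integer vector v = (x, y_1, ..., y_n) in Z^{n+1} is represented by
   v : nat -> Z with v 0 = x and v (S i) = y_{i+1} (i < n); entries beyond
   index n are irrelevant.  zeta i stands for zeta_{i+1} (i < n). *)
Definition zvec := nat -> Z.

Definition height (n : nat) (v : zvec) : R :=
  rmax (fun i => Rabs (IZR (v i))) (S n).

Definition linform (n : nat) (zeta : nat -> R) (v : zvec) : R :=
  IZR (v 0%nat) + rsum (fun i => zeta i * IZR (v (S i))) n.

Definition simdist (n : nat) (zeta : nat -> R) (v : zvec) : R :=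
  rmax (fun i => Rabs (zeta i * IZR (v 0%nat) - IZR (v (S i)))) n.

Definition nonzero (n : nat) (v : zvec) : Prop :=
  exists i, (i <= n)%nat /\ v i <> 0%Z.

Definition lin_indep (n j : nat) (V : nat -> zvec) : Prop :=
  forall c : nat -> R,
    (forall i, (i <= n)%nat -> rsum (fun k => c k * IZR (V k i)) j = 0) ->
    forall k, (k < j)%nat -> c k = 0.

Definition Q_lin_indep_1 (n : nat) (zeta : nat -> R) : Prop :=
  forall (c0 : Q) (c : nat -> Q),
    Q2R c0 + rsum (fun i => Q2R (c i) * zeta i) n = 0 ->
    Q2R c0 = 0 /\ forall i, (i < n)%nat -> Q2R (c i) = 0.

Definition w_set (n : nat) (zeta : nat -> R) (j : nat) (nu : R) : Prop :=
  forall X0, exists X, X0 <= X /\ 1 <= X /\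
    exists V : nat -> zvec, lin_indep n j V /\
      forall k, (k < j)%nat ->
        height n (V k) <= X /\ Rabs (linform n zeta (V k)) <= Rpower X (- nu).

Definition what_set (n : nat) (zeta : nat -> R) (j : nat) (nu : R) : Prop :=
  exists X0, 1 <= X0 /\ forall X, X0 <= X ->
    exists V : nat -> zvec, lin_indep n j V /\
      forall k, (k < j)%nat ->
        height n (V k) <= X /\ Rabs (linform n zeta (V k)) <= Rpower X (- nu).

Definition lambda_set (n : nat) (zeta : nat -> R) (j : nat) (nu : R) : Prop :=
  forall X0, exists X, X0 <= X /\ 1 <= X /\
    exists V : nat -> zvec, lin_indep n j V /\
      forall k, (k < j)%nat ->
        Rabs (IZR (V k 0%nat)) <= X /\ simdist n zeta (V k) <= Rpower X (- nu).

Definition lhat_set (n : nat) (zeta : nat -> R) (j : nat) (nu : R) : Prop :=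
  exists X0, 1 <= X0 /\ forall X, X0 <= X ->
    exists V : nat -> zvec, lin_indep n j V /\
      forall k, (k < j)%nat ->
        Rabs (IZR (V k 0%nat)) <= X /\ simdist n zeta (V k) <= Rpower X (- nu).

Definition same_up_to_sign (n : nat) (u v : zvec) : Prop :=
  (forall i, (i <= n)%nat -> u i = v i) \/
  (forall i, (i <= n)%nat -> u i = Z.opp (v i)).

Definition best_approx (n : nat) (zeta : nat -> R) (v : zvec) : Prop :=
  nonzero n v /\
  forall u, nonzero n u -> height n u < height n v ->
    Rabs (linform n zeta u) > Rabs (linform n zeta v).

Definition best_approx_seq (n : nat) (zeta : nat -> R) (bv : nat -> zvec) : Prop :=
  (forall k, best_approx n zeta (bv k)) /\
  (forall v, best_approx n zeta v -> exists k, same_up_to_sign n v (bv k)) /\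
  (forall k, height n (bv k) <= height n (bv (S k)) /\
             Rabs (linform n zeta (bv (S k))) < Rabs (linform n zeta (bv k))).

Definition sim_best_approx (n : nat) (zeta : nat -> R) (v : zvec) : Prop :=
  v 0%nat <> 0%Z /\
  (forall i, (i < n)%nat -> forall y : Z,
      Rabs (zeta i * IZR (v 0%nat) - IZR (v (S i))) <=
      Rabs (zeta i * IZR (v 0%nat) - IZR y)) /\
  forall u, nonzero n u -> Rabs (IZR (u 0%nat)) < Rabs (IZR (v 0%nat)) ->
    simdist n zeta u > simdist n zeta v.

Definition sim_best_approx_seq (n : nat) (zeta : nat -> R) (bu : nat -> zvec) : Prop :=
  (forall k, sim_best_approx n zeta (bu k)) /\
  (forall v, sim_best_approx n zeta v -> exists k, same_up_to_sign n v (bu k)) /\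
  (forall k, Rabs (IZR (bu k 0%nat)) <= Rabs (IZR (bu (S k) 0%nat)) /\
             simdist n zeta (bu (S k)) < simdist n zeta (bu k)).

(* Both problems are treated at once, for an abstract height [ht] and error [er], along a
   sequence of best approximations [v_k] with heights [H_k] and errors [L_k].
   For [nu] below the uniform exponent and [mu] above the ordinary one, eventually
   [H_k ^ (- mu) < L_k <= (H_(k+1) / 2) ^ (- nu)], hence [ln H_(k+1) <= (mu / nu) ln H_k + ln 2].
   If [v_k, ..., v_(k+i-1)] are independent, they all have height at most [X = H_(k+i-1)] and
   error at most [L_k], and the growth estimate turns [L_k <= H_(k+1) ^ (- nu)] into
   [L_k <= X ^ (- nu ^ (i-1) / mu ^ (i-2))] up to constants; this gives the bounds for
   [w_(n,i)] and [lambda_(n,i)].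
   Independent triples occur infinitely often unconditionally: otherwise the tail of [(v_k)]
   lies in a rational plane, and the integrality of 2 x 2 minors contradicts Dirichlet's
   theorem (linear form) or the linear independence of [1, zeta_1, ..., zeta_n] over [Q]
   (simultaneous approximation).
   When [v_k, ..., v_(k+n)] are independent, their integer determinant is nonzero; after a
   unimodular change of columns it is at most [(n+1)! L_k H_(k+1) H_(k+n) ^ (n-1)]
   (resp. [(n+1)! |x_(k+n)| L_(k+n-1) L_k ^ (n-1)]), and the growth estimate turns this into a
   polynomial inequality between the exponents, equivalent to the last bounds of (ii) and (iv). *)

From Pilot Require Import Defs.
From Stdlib Require Import Reals QArith Qreals.
Open Scope R_scope.
From Stdlib Require Import Lra Lia List Classical Epsilon.
From mathcomp Require all_boot all_order all_algebra perm Rstruct.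
(* [RIneq.nonzero] shadows [Defs.nonzero]. *)
Import Defs.

Lemma rsum_ext f g m : (forall i, (i < m)%nat -> f i = g i) -> rsum f m = rsum g m.
Proof.
  induction m; simpl; intros H; auto.
  rewrite IHm by (intros; apply H; lia). rewrite H by lia. reflexivity.
Qed.

Lemma rsum_add f g m : rsum (fun i => f i + g i) m = rsum f m + rsum g m.
Proof. induction m; simpl; [lra|rewrite IHm; lra]. Qed.

Lemma rsum_scal c f m : rsum (fun i => c * f i) m = c * rsum f m.
Proof. induction m; simpl; [lra|rewrite IHm; lra]. Qed.

Lemma rsum_eq0 f m : (forall i, (i < m)%nat -> f i = 0) -> rsum f m = 0.
Proof.
  induction m; simpl; intros H; [lra|].
  rewrite IHm by (intros; apply H; lia). rewrite H by lia. lra.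
Qed.

Lemma rsum_delta f m j : (j < m)%nat -> (forall i, (i < m)%nat -> i <> j -> f i = 0) ->
  rsum f m = f j.
Proof.
  induction m; intros Hj H; simpl; [lia|].
  destruct (Nat.eq_dec j m) as [->|Hjm].
  - rewrite rsum_eq0; [lra|]. intros; apply H; lia.
  - rewrite IHm; [rewrite (H m) by lia; lra|lia|intros; apply H; lia].
Qed.

Lemma rsum_delta2 f m a b : (a < m)%nat -> (b < m)%nat -> a <> b ->
  (forall i, (i < m)%nat -> i <> a -> i <> b -> f i = 0) -> rsum f m = f a + f b.
Proof.
  induction m; intros Ha Hb Hab H; simpl; [lia|].
  destruct (Nat.eq_dec m a) as [<-|Hma]; [|destruct (Nat.eq_dec m b) as [<-|Hmb]].
  - rewrite (rsum_delta f m b); [lra|lia|]. intros; apply H; lia.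
  - rewrite (rsum_delta f m a); [lra|lia|]. intros; apply H; lia.
  - rewrite IHm, (H m); try lra; try lia. intros; apply H; lia.
Qed.

Lemma rsum_pad0 f m m' : (m <= m')%nat -> (forall i, (m <= i)%nat -> f i = 0) ->
  rsum f m' = rsum f m.
Proof. intros Hm H. induction Hm; [reflexivity|]. simpl. rewrite IHHm, H by lia. lra. Qed.

Lemma rsum_2 f : rsum f 2 = f 0%nat + f 1%nat.
Proof. simpl; lra. Qed.

Lemma rsum_3 f : rsum f 3 = f 0%nat + f 1%nat + f 2%nat.
Proof. simpl; lra. Qed.

Lemma rmax_ge0 f m : 0 <= rmax f m.
Proof. induction m; simpl; [lra|]. eapply Rle_trans; [apply IHm|apply Rmax_l]. Qed.

Lemma rmax_ub f m i : (i < m)%nat -> f i <= rmax f m.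
Proof.
  induction m; intros Hi; simpl; [lia|].
  destruct (Nat.eq_dec i m) as [->|]; [apply Rmax_r|].
  eapply Rle_trans; [apply IHm; lia|apply Rmax_l].
Qed.

Lemma rmax_lub f m B : 0 <= B -> (forall i, (i < m)%nat -> f i <= B) -> rmax f m <= B.
Proof.
  induction m; intros HB H; simpl; auto.
  apply Rmax_lub; [apply IHm|]; auto.
Qed.

Lemma rmax_ext f g m : (forall i, (i < m)%nat -> f i = g i) -> rmax f m = rmax g m.
Proof.
  induction m; simpl; intros H; auto.
  rewrite IHm by (intros; apply H; lia). rewrite H by lia. reflexivity.
Qed.

Lemma rmax_scal t f m : 0 <= t -> rmax (fun i => t * f i) m = t * rmax f m.
Proof. intros Ht; induction m; simpl; [lra|]. rewrite IHm. apply RmaxRmult; auto. Qed.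

Lemma nat_floor x : 0 <= x -> exists N : nat, INR N <= x < INR N + 1.
Proof.
  intros Hx. destruct (base_Int_part x) as [H1 H2].
  assert (H0 : (0 <= Int_part x)%Z) by (apply le_IZR, Rnot_lt_le; intros H; apply lt_IZR in H;
    assert (H' : (Int_part x <= -1)%Z) by lia; apply IZR_le in H'; lra).
  exists (Z.to_nat (Int_part x)). rewrite INR_IZR_INZ, Znat.Z2Nat.id by auto. lra.
Qed.

Lemma Rabs_IZR_ge1 z : z <> 0%Z -> 1 <= Rabs (IZR z).
Proof. intros Hz. rewrite Rabs_Zabs. apply IZR_le. lia. Qed.

Lemma Rabs_sub_le a b : Rabs (a - b) <= Rabs a + Rabs b.
Proof. unfold Rminus. eapply Rle_trans; [apply Rabs_triang|]. rewrite Rabs_Ropp. lra. Qed.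

Lemma Rabs_m1 : Rabs (-1) = 1.
Proof. rewrite Rabs_left; lra. Qed.

Lemma pow_div a b j : (a / b) ^ j = a ^ j / b ^ j.
Proof. unfold Rdiv. rewrite Rpow_mult_distr, pow_inv. reflexivity. Qed.

Lemma pow_pred n x : (1 <= n)%nat -> x ^ n = x * x ^ (n - 1).
Proof. intros Hn. destruct n; [lia|]. simpl. rewrite Nat.sub_0_r. reflexivity. Qed.

Lemma ln2_pos : 0 < ln 2.
Proof. pose proof ln_lt_2; lra. Qed.

Lemma ln_le x y : 0 < x -> x <= y -> ln x <= ln y.
Proof. intros Hx [H|H]; [left; apply ln_increasing; auto|subst; lra]. Qed.

Lemma exp_le x y : x <= y -> exp x <= exp y.
Proof. intros [H|H]; [left; apply exp_increasing; auto|subst; lra]. Qed.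

Lemma ln_prod_ge0 C x y z m : 0 < C -> 0 < x -> 0 < y -> 0 < z ->
  1 <= C * x * y * z ^ m -> 0 <= ln C + ln x + ln y + INR m * ln z.
Proof.
  intros HC Hx Hy Hz H. apply ln_le in H; [|lra]. rewrite ln_1 in H.
  rewrite !ln_mult, ln_pow in H; auto; repeat apply Rmult_lt_0_compat; auto; apply pow_lt; auto.
Qed.

Lemma le_Rpower_of_ln e X y : 0 < e -> ln e <= y * ln X -> e <= Rpower X y.
Proof. intros He H. unfold Rpower. rewrite <- (exp_ln e) by auto. apply exp_le; auto. Qed.

Lemma ln_le_of_le_Rpower e X y : 0 < e -> e <= Rpower X y -> ln e <= y * ln X.
Proof. intros He H. rewrite <- ln_Rpower. apply ln_le; auto. Qed.

Lemma Rpower_ge1 X y : 1 <= X -> 0 <= y -> 1 <= Rpower X y.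
Proof. intros HX Hy. rewrite <- (Rpower_O X) by lra. apply Rle_Rpower; auto. Qed.

Lemma Rpower_root_le a b m : (1 <= m)%nat -> 0 < a -> 0 < b -> a <= b ^ m ->
  Rpower a (/ INR m) <= b.
Proof.
  intros Hm Ha Hb Hab.
  assert (Hm0 : 0 < INR m) by (apply lt_0_INR; lia).
  rewrite <- (Rpower_pow m b) in Hab by auto.
  assert (H := Rle_Rpower_l _ _ (/ INR m) ltac:(left; apply Rinv_0_lt_compat; lra) (conj Ha Hab)).
  rewrite Rpower_mult, Rinv_r, Rpower_1 in H by lra. exact H.
Qed.

Lemma decreasing_seq_lt (g : nat -> R) : (forall k, g (S k) < g k) ->
  forall j j', (j < j')%nat -> g j' < g j.
Proof. intros H j j' Hj. induction Hj; [apply H|]. eapply Rlt_trans; [apply H|]; auto. Qed.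

Lemma decreasing_seq_le (g : nat -> R) : (forall k, g (S k) < g k) ->
  forall j j', (j <= j')%nat -> g j' <= g j.
Proof.
  intros H j j' Hj. destruct (Nat.eq_dec j j') as [->|Hne]; [lra|].
  left. apply decreasing_seq_lt; auto; lia.
Qed.

Lemma increasing_seq_le (g : nat -> R) : (forall k, g k <= g (S k)) ->
  forall j j', (j <= j')%nat -> g j <= g j'.
Proof. intros H j j' Hj. induction Hj; [lra|]. eapply Rle_trans; [|apply H]; auto. Qed.

Lemma affine_rec_bound (a : nat -> R) th c K : 1 <= th -> 0 <= c ->
  (forall k, (K <= k)%nat -> a (S k) <= th * a k + c) ->
  forall k m, (K <= k)%nat -> a (k + m)%nat <= th ^ m * (a k + INR m * c).
Proof.
  intros Hth Hc H k m Hk. induction m.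
  - rewrite Nat.add_0_r. simpl. lra.
  - rewrite Nat.add_succ_r, S_INR. eapply Rle_trans; [apply H; lia|]. simpl.
    assert (1 <= th ^ S m) by (apply pow_R1_Rle; auto).
    assert (c <= th * th ^ m * c) by (rewrite <- (Rmult_1_l c) at 1; apply Rmult_le_compat_r; simpl in *; lra).
    assert (th * a (k + m)%nat <= th * (th ^ m * (a k + INR m * c))) by (apply Rmult_le_compat_l; lra).
    nra.
Qed.

Lemma nonneg_of_unbounded_witnesses c D : (forall B, exists x, B < x /\ 0 <= c + D * x) -> 0 <= D.
Proof.
  intros H. destruct (Rle_dec 0 D) as [|HD]; auto. exfalso.
  destruct (H (c / - D)) as [x [Hx Hc]].
  assert (- D * (c / - D) < - D * x) by (apply Rmult_lt_compat_l; lra).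
  replace (- D * (c / - D)) with c in H0 by (field; lra). lra.
Qed.

Lemma ge_at_of_ge_right f a g : continuity_pt f a -> (forall x, a < x -> g <= f x) -> g <= f a.
Proof.
  intros Hc H. destruct (Rle_dec g (f a)) as [|Hn]; auto. exfalso.
  destruct (Hc (g - f a)) as [alp [Halp Hx]]; [lra|].
  specialize (Hx (a + alp / 2)). simpl in Hx. unfold D_x, no_cond, R_dist in Hx.
  assert (Rabs (f (a + alp / 2) - f a) < g - f a).
  { apply Hx. split; [split; auto; lra|]. replace (a + alp / 2 - a) with (alp / 2) by ring.
    rewrite Rabs_right; lra. }
  specialize (H (a + alp / 2) ltac:(lra)). apply Rabs_def2 in H0. lra.
Qed.

Lemma le_at_of_le_left f a g d : continuity_pt f a -> 0 < d ->
  (forall x, a - d < x -> x < a -> f x <= g) -> f a <= g.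
Proof.
  intros Hc Hd H. destruct (Rle_dec (f a) g) as [|Hn]; auto. exfalso.
  destruct (Hc (f a - g)) as [alp [Halp Hx]]; [lra|].
  set (e := Rmin (alp / 2) (d / 2)).
  assert (0 < e) by (unfold e; apply Rmin_glb_lt; lra).
  assert (e <= alp / 2) by apply Rmin_l. assert (e <= d / 2) by apply Rmin_r.
  specialize (Hx (a - e)). simpl in Hx. unfold D_x, no_cond, R_dist in Hx.
  assert (Rabs (f (a - e) - f a) < f a - g).
  { apply Hx. split; [split; auto; lra|]. replace (a - e - a) with (- e) by ring.
    rewrite Rabs_Ropp, Rabs_right; lra. }
  specialize (H (a - e) ltac:(lra) ltac:(lra)). apply Rabs_def2 in H3. lra.
Qed.

Lemma lub_ge_of_lt (E : R -> Prop) l T : is_lub E l -> (forall r, r < T -> E r) -> T <= l.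
Proof.
  intros [Hub _] H. destruct (Rle_dec T l) as [|Hn]; auto. exfalso.
  assert (E ((T + l) / 2)) by (apply H; lra). apply Hub in H0. lra.
Qed.

Lemma lub_mem_of_lt (E : R -> Prop) l nu : is_lub E l -> (forall a b, E a -> b <= a -> E b) ->
  nu < l -> E nu.
Proof.
  intros [Hub Hl] Hm Hnu. apply NNPP. intros Hn.
  assert (l <= nu); [|lra]. apply Hl. intros x Ex. destruct (Rle_dec x nu) as [|Hx]; auto.
  exfalso. apply Hn. apply (Hm x); auto; lra.
Qed.

Lemma ex_minimizer {A} (f : A -> nat) (P : A -> Prop) :
  (exists a, P a) -> exists a, P a /\ forall b, P b -> (f a <= f b)%nat.
Proof.
  intros [a Ha]. apply NNPP. intros Hn.
  assert (Hnone : forall m b, f b = m -> ~ P b).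
  { intro m. induction m as [m IH] using (well_founded_induction Wf_nat.lt_wf). intros b Hb Pb.
    apply Hn. exists b. split; auto. intros b' Pb'.
    destruct (Compare_dec.le_lt_dec (f b) (f b')); auto. exfalso. apply (IH (f b') ltac:(lia) b'); auto. }
  apply (Hnone (f a) a); auto.
Qed.

Lemma ex_iterate {A} (P : A -> Prop) (Rel : A -> A -> Prop) a0 :
  P a0 -> (forall a, P a -> exists b, P b /\ Rel a b) ->
  exists s : nat -> A, s 0%nat = a0 /\ forall k, P (s k) /\ Rel (s k) (s (S k)).
Proof.
  intros H0 Hstep.
  set (next := fun a => epsilon (inhabits a0) (fun b => P b /\ Rel a b)).
  assert (Hnext : forall a, P a -> P (next a) /\ Rel a (next a)).
  { intros a Ha. apply epsilon_spec. apply Hstep; auto. }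
  exists (fun k => Nat.iter k next a0). split; [reflexivity|].
  intros k. assert (Hk : P (Nat.iter k next a0)).
  { induction k; simpl; auto. apply Hnext; auto. }
  split; auto. apply Hnext; auto.
Qed.

Definition coordR (v : zvec) (i : nat) : R := IZR (v i).

Lemma height_ub n v i : (i <= n)%nat -> Rabs (IZR (v i)) <= height n v.
Proof. intros; apply (rmax_ub (fun i => Rabs (IZR (v i)))); lia. Qed.

Lemma height_lub n v B : 0 <= B -> (forall i, (i <= n)%nat -> Rabs (IZR (v i)) <= B) ->
  height n v <= B.
Proof. intros HB H. apply rmax_lub; auto. intros; apply H; lia. Qed.

Lemma height_ge0 n v : 0 <= height n v.
Proof. apply rmax_ge0. Qed.

Lemma height_ge1 n v : nonzero n v -> 1 <= height n v.
Proof.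
  intros [i [Hi Hv]]. eapply Rle_trans; [apply Rabs_IZR_ge1; eauto|apply height_ub; auto].
Qed.

Lemma simdist_ub n zeta v i : (i < n)%nat ->
  Rabs (zeta i * IZR (v 0%nat) - IZR (v (S i))) <= simdist n zeta v.
Proof. intros; apply (rmax_ub (fun i => Rabs (zeta i * IZR (v 0%nat) - IZR (v (S i))))); auto. Qed.

Lemma simdist_lub n zeta v B : 0 <= B ->
  (forall i, (i < n)%nat -> Rabs (zeta i * IZR (v 0%nat) - IZR (v (S i))) <= B) ->
  simdist n zeta v <= B.
Proof. apply rmax_lub. Qed.

Lemma simdist_ge0 n zeta v : 0 <= simdist n zeta v.
Proof. apply rmax_ge0. Qed.

Lemma height_scale n u v t : (forall i, (i <= n)%nat -> coordR u i = t * coordR v i) ->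
  height n u = Rabs t * height n v.
Proof.
  intros H. unfold height. rewrite <- rmax_scal by apply Rabs_pos.
  apply rmax_ext. intros i Hi. unfold coordR in H. rewrite H by lia. apply Rabs_mult.
Qed.

Lemma linform_comb n zeta u p q a b :
  (forall i, (i <= n)%nat -> coordR u i = a * coordR p i + b * coordR q i) ->
  linform n zeta u = a * linform n zeta p + b * linform n zeta q.
Proof.
  intros H. unfold linform. unfold coordR in H. rewrite H by lia.
  rewrite (rsum_ext _ (fun i => a * (zeta i * IZR (p (S i))) + b * (zeta i * IZR (q (S i))))).
  - rewrite rsum_add, !rsum_scal. ring.
  - intros i Hi. rewrite H by lia. ring.
Qed.

Lemma linform_scale n zeta u v t : (forall i, (i <= n)%nat -> coordR u i = t * coordR v i) ->
  linform n zeta u = t * linform n zeta v.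
Proof.
  intros H. rewrite (linform_comb n zeta u v v t 0); [ring|].
  intros i Hi; rewrite H by auto; ring.
Qed.

Lemma simdist_scale n zeta u v t : (forall i, (i <= n)%nat -> coordR u i = t * coordR v i) ->
  simdist n zeta u = Rabs t * simdist n zeta v.
Proof.
  intros H. unfold simdist. rewrite <- rmax_scal by apply Rabs_pos.
  apply rmax_ext. intros i Hi. unfold coordR in H. rewrite !H by lia.
  rewrite <- Rabs_mult. f_equal. ring.
Qed.

Lemma sign_coordR n u v : same_up_to_sign n u v ->
  exists t, Rabs t = 1 /\ forall i, (i <= n)%nat -> coordR u i = t * coordR v i.
Proof.
  intros [H|H]; [exists 1|exists (-1)]; split; try apply Rabs_m1; try apply Rabs_R1;
    intros i Hi; unfold coordR; rewrite H by auto; rewrite ?opp_IZR; ring.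
Qed.

Lemma lin_indep_single n u : nonzero n u -> lin_indep n 1 (fun _ => u).
Proof.
  intros [i [Hi Hu]] c Hc k Hk. replace k with 0%nat by lia.
  specialize (Hc i Hi). simpl in Hc. rewrite Rplus_0_l in Hc.
  apply Rmult_integral in Hc. destruct Hc as [|Hc]; auto. apply eq_IZR in Hc. contradiction.
Qed.

Lemma lin_indep_nonzero n V : lin_indep n 1 V -> nonzero n (V 0%nat).
Proof.
  intros H. apply NNPP. intros Hn.
  assert (Hc : 1 = 0); [|lra].
  refine (H (fun _ => 1) _ 0%nat _); [|lia].
  intros i Hi. simpl. replace (V 0%nat i) with 0%Z; [lra|].
  apply NNPP; intro; apply Hn; exists i; auto.
Qed.

Lemma lin_indep_prefix n j j' V : (j' <= j)%nat -> lin_indep n j V -> lin_indep n j' V.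
Proof.
  intros Hj H c Hc k Hk.
  set (c' := fun k => if Nat.ltb k j' then c k else 0).
  assert (Hc' : c' k = 0).
  { apply (H c'); [|lia]. intros i Hi.
    rewrite (rsum_pad0 _ j' j); auto.
    - rewrite <- (Hc i Hi). apply rsum_ext. intros i0 Hi0. unfold c'.
      destruct (Nat.ltb_spec i0 j'); [auto|lia].
    - intros i0 Hi0; unfold c'; destruct (Nat.ltb_spec i0 j'); [lia|lra]. }
  unfold c' in Hc'. destruct (Nat.ltb_spec k j'); [auto|lia].
Qed.

(** * Exponent sets and chains of best approximations *)

Definition approx_set (n : nat) (ht er : zvec -> R) (j : nat) (nu : R) : Prop :=
  forall X0, exists X, X0 <= X /\ 1 <= X /\
    exists V : nat -> zvec, lin_indep n j V /\
      forall k, (k < j)%nat -> ht (V k) <= X /\ er (V k) <= Rpower X (- nu).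

Definition unif_approx_set (n : nat) (ht er : zvec -> R) (j : nat) (nu : R) : Prop :=
  exists X0, 1 <= X0 /\ forall X, X0 <= X ->
    exists V : nat -> zvec, lin_indep n j V /\
      forall k, (k < j)%nat -> ht (V k) <= X /\ er (V k) <= Rpower X (- nu).

Definition often_indep_blocks (n J : nat) (s : nat -> zvec) : Prop :=
  forall K, exists k, (K <= k)%nat /\ lin_indep n J (fun m => s (k + m)%nat).

Section ExponentSets.
Variables (n : nat) (ht er : zvec -> R).

Lemma unif_approx_set_antimono j a b :
  unif_approx_set n ht er j b -> a <= b -> unif_approx_set n ht er j a.
Proof.
  intros [X0 [H1 H]] Hab. exists X0; split; auto. intros X HX.
  destruct (H X HX) as [V [HV HH]]. exists V; split; auto. intros k Hk.
  destruct (HH k Hk); split; auto. eapply Rle_trans; eauto. apply Rle_Rpower; lra.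
Qed.

Lemma unif_approx_set_sub j a : unif_approx_set n ht er j a -> approx_set n ht er j a.
Proof.
  intros [X0 [H1 H]] X1. exists (Rmax X0 X1). split; [apply Rmax_r|].
  split; [eapply Rle_trans; [|apply Rmax_l]; auto|]. apply H, Rmax_l.
Qed.

Lemma unif_lub_le_lub j w wh : is_lub (approx_set n ht er j) w ->
  is_lub (unif_approx_set n ht er j) wh -> wh <= w.
Proof.
  intros [Hw _] [_ Hwh]. apply Hwh. intros x Hx. apply Hw, unif_approx_set_sub; auto.
Qed.

Lemma unif_approx_set_of_lt j wh nu : is_lub (unif_approx_set n ht er j) wh -> nu < wh ->
  unif_approx_set n ht er j nu.
Proof. intros H Hn. eapply lub_mem_of_lt; eauto. intros; eapply unif_approx_set_antimono; eauto. Qed.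

Lemma unif_approx_set_zero u : nonzero n u -> ht u <= 1 -> er u <= 1 ->
  unif_approx_set n ht er 1 0.
Proof.
  intros Hu Hh He. exists 1. split; [lra|]. intros X HX. exists (fun _ => u).
  split; [apply lin_indep_single; auto|]. intros k Hk. split; [lra|].
  rewrite Ropp_0, Rpower_O by lra. auto.
Qed.

Lemma approx_lub_lower_bound w mu : is_lub (approx_set n ht er 1) w -> w < mu ->
  exists B, forall u, nonzero n u -> B <= ht u -> Rpower (ht u) (- mu) < er u.
Proof.
  intros [Hw _] Hmu.
  assert (Hn : ~ approx_set n ht er 1 mu) by (intro H; apply Hw in H; lra).
  apply not_all_ex_not in Hn. destruct Hn as [X0 Hn].
  exists (Rmax X0 1). intros u Hu HB.
  destruct (Rlt_le_dec (Rpower (ht u) (- mu)) (er u)) as [|H]; auto.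
  exfalso. apply Hn. exists (ht u).
  split; [eapply Rle_trans; [apply Rmax_l|eauto]|].
  split; [eapply Rle_trans; [apply Rmax_r|eauto]|].
  exists (fun _ => u). split; [apply lin_indep_single; auto|]. intros k Hk; split; lra.
Qed.

End ExponentSets.

Record best_chain (n : nat) (ht er : zvec -> R) (s : nat -> zvec) : Prop := {
  chain_ht_le : forall k, ht (s k) <= ht (s (S k));
  chain_er_lt : forall k, er (s (S k)) < er (s k);
  chain_minimal : forall k u, nonzero n u -> ht u < ht (s (S k)) -> er (s k) <= er u;
  chain_ht_unbounded : forall B, exists k, B < ht (s k);
  chain_er_pos : forall k, 0 < er (s k);
  chain_ht_ge1 : forall k, 1 <= ht (s k);
  chain_nonzero : forall k, nonzero n (s k) }.

Section BestChain.
Variables (n : nat) (ht er : zvec -> R) (s : nat -> zvec).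
Hypothesis Hs : best_chain n ht er s.

Lemma chain_ht_mono j j' : (j <= j')%nat -> ht (s j) <= ht (s j').
Proof. induction 1; [lra|]. eapply Rle_trans; [eauto|apply (chain_ht_le _ _ _ _ Hs)]. Qed.

Lemma chain_er_anti j j' : (j <= j')%nat -> er (s j') <= er (s j).
Proof. induction 1; [lra|]. pose proof (chain_er_lt _ _ _ _ Hs m). lra. Qed.

Lemma chain_ht_eventually_gt B K :
  exists k, (K <= k)%nat /\ forall k', (k <= k')%nat -> B < ht (s k').
Proof.
  destruct (chain_ht_unbounded _ _ _ _ Hs B) as [k Hk].
  exists (Nat.max K k). split; [lia|]. intros k' Hk'.
  eapply Rlt_le_trans; eauto. apply chain_ht_mono. lia.
Qed.

Lemma chain_ln_ht_gt B K : exists k, (K <= k)%nat /\ forall k', (k <= k')%nat -> B < ln (ht (s k')).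
Proof.
  destruct (chain_ht_eventually_gt (exp B) K) as [k [Hk H]]. exists k. split; auto.
  intros k' Hk'. rewrite <- (ln_exp B). apply ln_increasing; [apply exp_pos|auto].
Qed.

(* Apply the uniform exponent at [X = ht (s (S k)) / 2]: the vector it provides is shorter than
   [s (S k)], hence no better than [s k]. *)
Lemma chain_ln_er_le nu : unif_approx_set n ht er 1 nu -> 0 <= nu ->
  exists K, forall k, (K <= k)%nat -> ln (er (s k)) <= nu * ln 2 - nu * ln (ht (s (S k))).
Proof.
  intros [X0 [HX0 Hh]] Hnu.
  destruct (chain_ht_eventually_gt (2 * X0) 0) as [K [_ HK]].
  exists K. intros k Hk. set (h := ht (s (S k))).
  assert (Hh1 : 2 * X0 < h) by (apply HK; lia).
  destruct (Hh (h / 2)) as [V [HV HVb]]; [lra|].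
  destruct (HVb 0%nat) as [Hht Her]; [lia|].
  assert (Hle : er (s k) <= er (V 0%nat)).
  { apply (chain_minimal _ _ _ _ Hs); [apply lin_indep_nonzero; auto|fold h; lra]. }
  assert (Hp := chain_er_pos _ _ _ _ Hs k).
  apply ln_le_of_le_Rpower in Her; [|lra].
  assert (ln (er (s k)) <= ln (er (V 0%nat))) by (apply ln_le; auto).
  unfold Rdiv in Her. rewrite ln_mult, ln_Rinv in Her by lra. nra.
Qed.

Lemma chain_ln_er_gt w mu : is_lub (approx_set n ht er 1) w -> w < mu ->
  exists K, forall k, (K <= k)%nat -> - mu * ln (ht (s k)) < ln (er (s k)).
Proof.
  intros Hw Hmu. destruct (approx_lub_lower_bound n ht er w mu Hw Hmu) as [B H].
  destruct (chain_ht_eventually_gt B 0) as [K [_ HK]]. exists K. intros k Hk.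
  rewrite <- (ln_Rpower (ht (s k)) (- mu)). apply ln_increasing.
  - unfold Rpower; apply exp_pos.
  - apply H; [apply (chain_nonzero _ _ _ _ Hs)|left; apply HK; auto].
Qed.

(* Eventually [ht (s k) ^ (- mu) < er (s k) <= (ht (s (S k)) / 2) ^ (- nu)], so the logarithmic
   heights grow at most geometrically with ratio [mu / nu]. *)
Lemma chain_regime w nu mu : is_lub (approx_set n ht er 1) w ->
  unif_approx_set n ht er 1 nu -> 0 < nu <= mu -> w < mu ->
  exists K, forall k, (K <= k)%nat ->
    ln (er (s k)) <= nu * ln 2 - nu * ln (ht (s (S k))) /\
    forall m, ln (ht (s (k + m)%nat)) <= (mu / nu) ^ m * (ln (ht (s k)) + INR m * ln 2).
Proof.
  intros Hw Hh Hnu Hmu.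
  destruct (chain_ln_er_le nu Hh) as [K1 H1]; [lra|].
  destruct (chain_ln_er_gt w mu Hw Hmu) as [K2 H2].
  assert (Hstep : forall k, (Nat.max K1 K2 <= k)%nat ->
            ln (ht (s (S k))) <= mu / nu * ln (ht (s k)) + ln 2).
  { intros k Hk. assert (A := H1 k ltac:(lia)). assert (B := H2 k ltac:(lia)).
    apply (Rmult_le_reg_l nu); [lra|].
    replace (nu * (mu / nu * ln (ht (s k)) + ln 2)) with (mu * ln (ht (s k)) + nu * ln 2)
      by (field; lra). lra. }
  assert (Hth : 1 <= mu / nu) by (apply (Rmult_le_reg_r nu); [lra|]; field_simplify; lra).
  exists (Nat.max K1 K2). intros k Hk. split; [apply H1; lia|].
  intros m. apply (affine_rec_bound (fun k => ln (ht (s k))) _ _ _ Hth (Rlt_le _ _ ln2_pos) Hstep).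
  auto.
Qed.

End BestChain.

Section ChainExponents.
Variables (n : nat) (ht er : zvec -> R) (s : nat -> zvec).
Hypothesis Hs : best_chain n ht er s.

Lemma chain_block_exps_nonpos J rho : unif_approx_set n ht er 1 0 ->
  often_indep_blocks n J s -> rho <= 0 -> approx_set n ht er J rho.
Proof.
  intros Hh Hinf Hr X0.
  destruct (chain_ln_er_le n ht er s Hs 0 Hh (Rle_refl 0)) as [K1 H1].
  destruct (Hinf K1) as [k [Hk Hli]].
  set (X := Rmax X0 (ht (s (k + (J - 1))%nat))).
  assert (HX : 1 <= X) by (eapply Rle_trans; [apply (chain_ht_ge1 _ _ _ _ Hs)|apply Rmax_r]).
  exists X. split; [apply Rmax_l|]. split; auto.
  exists (fun m => s (k + m)%nat). split; auto. intros m Hm. split.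
  - eapply Rle_trans; [|apply Rmax_r]. apply (chain_ht_mono n ht er s Hs). lia.
  - eapply Rle_trans; [apply (chain_er_anti n ht er s Hs k); lia|].
    assert (Hpos := chain_er_pos _ _ _ _ Hs k).
    assert (er (s k) <= 1).
    { rewrite <- (exp_ln (er (s k))), <- exp_0 by auto. apply exp_le.
      specialize (H1 k Hk). lra. }
    eapply Rle_trans; eauto. apply Rpower_ge1; lra.
Qed.

(* The error of [s k] is controlled by [ht (s (S k))], which by geometric growth is at least a
   fixed power of the height [ht (s (k + J - 1))] closing the block. *)
Lemma chain_ln_er_le_block w J nu mu : (2 <= J)%nat ->
  is_lub (approx_set n ht er 1) w -> unif_approx_set n ht er 1 nu -> 0 < nu <= mu -> w < mu ->
  exists K, forall k, (K <= k)%nat -> ln (er (s k)) <=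
    nu * INR (J - 1) * ln 2 - nu / (mu / nu) ^ (J - 2) * ln (ht (s (k + (J - 1))%nat)).
Proof.
  intros HJ Hw Hh Hnu Hmu.
  destruct (chain_regime n ht er s Hs w nu mu Hw Hh Hnu Hmu) as [K HK].
  exists K. intros k Hk.
  set (P := (mu / nu) ^ (J - 2)).
  assert (HP : 0 < P) by (apply pow_lt, Rdiv_lt_0_compat; lra).
  set (X := ht (s (k + (J - 1))%nat)).
  destruct (HK k Hk) as [Her _]. destruct (HK (S k) ltac:(lia)) as [_ Hg].
  specialize (Hg (J - 2)%nat). replace (S k + (J - 2))%nat with (k + (J - 1))%nat in Hg by lia.
  fold X P in Hg.
  assert (Ha1 : ln X / P - INR (J - 2) * ln 2 <= ln (ht (s (S k)))).
  { apply (Rmult_le_reg_l P); auto.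
    replace (P * (ln X / P - INR (J - 2) * ln 2)) with (ln X - P * (INR (J - 2) * ln 2))
      by (field; lra). lra. }
  assert (HJ1 : INR (J - 1) = INR (J - 2) + 1) by (rewrite <- S_INR; f_equal; lia).
  assert (nu * (ln X / P - INR (J - 2) * ln 2) <= nu * ln (ht (s (S k))))
    by (apply Rmult_le_compat_l; lra).
  replace (nu * (ln X / P - INR (J - 2) * ln 2)) with (nu / P * ln X - nu * INR (J - 2) * ln 2) in *
    by (field; lra).
  rewrite HJ1. lra.
Qed.

Lemma chain_block_exps w J nu mu rho : (2 <= J)%nat ->
  is_lub (approx_set n ht er 1) w -> unif_approx_set n ht er 1 nu -> 0 < nu <= mu -> w < mu ->
  often_indep_blocks n J s -> rho < nu / (mu / nu) ^ (J - 2) -> approx_set n ht er J rho.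
Proof.
  intros HJ Hw Hh Hnu Hmu Hinf Hr X0.
  destruct (chain_ln_er_le_block w J nu mu HJ Hw Hh Hnu Hmu) as [K HK].
  set (rp := nu / (mu / nu) ^ (J - 2)) in *.
  set (A0 := nu * INR (J - 1) * ln 2 / (rp - rho)).
  destruct (chain_ht_eventually_gt n ht er s Hs (Rmax X0 (exp A0)) K) as [K3 [HK3a HK3]].
  destruct (Hinf K3) as [k [Hk Hli]].
  set (X := ht (s (k + (J - 1))%nat)).
  assert (HX : Rmax X0 (exp A0) < X) by (apply HK3; lia).
  assert (HlnX : A0 < ln X).
  { rewrite <- (ln_exp A0). apply ln_increasing; [apply exp_pos|].
    apply Rle_lt_trans with (Rmax X0 (exp A0)); [apply Rmax_r|auto]. }
  assert (Hlog := HK k ltac:(lia)). fold rp X in Hlog.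
  exists X. split; [apply Rle_trans with (Rmax X0 (exp A0)); [apply Rmax_l|lra]|].
  split; [apply (chain_ht_ge1 _ _ _ _ Hs)|].
  exists (fun m => s (k + m)%nat). split; auto. intros m Hm. split.
  - apply (chain_ht_mono n ht er s Hs). lia.
  - eapply Rle_trans; [apply (chain_er_anti n ht er s Hs k); lia|].
    apply le_Rpower_of_ln; [apply (chain_er_pos _ _ _ _ Hs)|].
    assert (Hrp : 0 < rp - rho) by lra.
    assert (nu * INR (J - 1) * ln 2 <= (rp - rho) * ln X); [|nra].
    apply (Rmult_lt_compat_l (rp - rho)) in HlnX; auto.
    unfold A0 in HlnX. field_simplify in HlnX; lra.
Qed.

Lemma chain_block_lub w wh J wJ : (2 <= J)%nat ->
  is_lub (approx_set n ht er 1) w -> is_lub (unif_approx_set n ht er 1) wh ->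
  unif_approx_set n ht er 1 0 -> often_indep_blocks n J s ->
  is_lub (approx_set n ht er J) wJ -> wh ^ (J - 1) / w ^ (J - 2) <= wJ.
Proof.
  intros HJ Hw Hwh H0 Hinf HwJ.
  assert (Hww : wh <= w) by (eapply unif_lub_le_lub; eauto).
  assert (HJ1 : (J - 1 = S (J - 2))%nat) by lia.
  destruct (proj1 Hwh 0 H0) as [Hwh0|<-].
  2: { rewrite HJ1. simpl. unfold Rdiv. rewrite !Rmult_0_l.
       apply (lub_ge_of_lt _ _ _ HwJ). intros r Hr.
       apply chain_block_exps_nonpos; auto; lra. }
  assert (Hnu : forall nu, 0 < nu -> nu < wh -> nu ^ (J - 1) / w ^ (J - 2) <= wJ).
  { intros nu Hnu0 Hnu1.
    enough (0 <= wJ - nu ^ (J - 1) / w ^ (J - 2)) by lra.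
    apply (ge_at_of_ge_right (fun mu => wJ - nu ^ (J - 1) / mu ^ (J - 2)) w).
    { reg; apply pow_nonzero; lra. }
    intros mu Hmu. enough (nu ^ (J - 1) / mu ^ (J - 2) <= wJ) by lra.
    apply (lub_ge_of_lt _ _ _ HwJ). intros rho Hr.
    apply (chain_block_exps w J nu mu rho HJ Hw);
      [apply (unif_approx_set_of_lt _ _ _ _ wh); auto|lra|lra|exact Hinf|].
    rewrite pow_div. replace (nu / (mu ^ (J - 2) / nu ^ (J - 2))) with (nu ^ (J - 1) / mu ^ (J - 2));
      auto. rewrite HJ1. simpl. field. split; apply pow_nonzero; lra. }
  apply (le_at_of_le_left (fun x => x ^ (J - 1) / w ^ (J - 2)) wh wJ wh); [|lra|].
  - reg; apply pow_nonzero; lra.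
  - intros x Hx1 Hx2. apply Hnu; lra.
Qed.

Lemma chain_exps_of_det_er_ht w nu mu C : (1 <= n)%nat ->
  is_lub (approx_set n ht er 1) w -> unif_approx_set n ht er 1 nu -> 0 < nu <= mu -> w < mu ->
  0 < C ->
  (forall K, exists k, (K <= k)%nat /\
     1 <= C * er (s k) * ht (s (S k)) * ht (s (k + n)%nat) ^ (n - 1)) ->
  nu <= 1 + INR (n - 1) * (mu / nu) ^ (n - 1).
Proof.
  intros Hn Hw Hh Hnu Hmu HC Hdet.
  destruct (chain_regime n ht er s Hs w nu mu Hw Hh Hnu Hmu) as [K HK].
  set (P := (mu / nu) ^ (n - 1)).
  assert (Hn1 : 0 <= INR (n - 1)) by apply pos_INR.
  enough (0 <= 1 - nu + INR (n - 1) * P) by lra.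
  apply (nonneg_of_unbounded_witnesses (ln C + nu * ln 2 + INR (n - 1) * P * (INR (n - 1) * ln 2))).
  intros B. destruct (chain_ln_ht_gt n ht er s Hs B K) as [K3 [HK3 HB]].
  destruct (Hdet K3) as [k [Hk Hd]].
  exists (ln (ht (s (S k)))). split; [apply HB; lia|].
  destruct (HK k ltac:(lia)) as [Her _]. destruct (HK (S k) ltac:(lia)) as [_ Hg].
  specialize (Hg (n - 1)%nat). replace (S k + (n - 1))%nat with (k + n)%nat in Hg by lia. fold P in Hg.
  pose proof (chain_ht_ge1 _ _ _ _ Hs) as H1.
  apply ln_prod_ge0 in Hd; try apply (chain_er_pos _ _ _ _ Hs); try (specialize (H1 (S k)); lra);
    try (specialize (H1 (k + n)%nat); lra); auto.
  assert (INR (n - 1) * ln (ht (s (k + n)%nat)) <=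
          INR (n - 1) * (P * (ln (ht (s (S k))) + INR (n - 1) * ln 2))) by (apply Rmult_le_compat_l; auto).
  nra.
Qed.

Lemma chain_exps_of_det_ht_er w nu mu C : (1 <= n)%nat ->
  is_lub (approx_set n ht er 1) w -> unif_approx_set n ht er 1 nu -> 0 < nu <= mu -> w < mu ->
  0 < C ->
  (forall K, exists k, (K <= k)%nat /\
     1 <= C * ht (s (k + n)%nat) * er (s (k + (n - 1))%nat) * er (s k) ^ (n - 1)) ->
  nu + INR (n - 1) * (nu / (mu / nu) ^ (n - 1)) <= 1.
Proof.
  intros Hn Hw Hh Hnu Hmu HC Hdet.
  destruct (chain_regime n ht er s Hs w nu mu Hw Hh Hnu Hmu) as [K HK].
  set (P := (mu / nu) ^ (n - 1)).
  assert (HP : 0 < P) by (apply pow_lt, Rdiv_lt_0_compat; lra).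
  assert (Hn1 : 0 <= INR (n - 1)) by apply pos_INR.
  enough (0 <= 1 - nu - INR (n - 1) * (nu / P)) by lra.
  apply (nonneg_of_unbounded_witnesses
           (ln C + nu * ln 2 + INR (n - 1) * (nu * ln 2 + nu * INR (n - 1) * ln 2))).
  intros B. destruct (chain_ln_ht_gt n ht er s Hs B K) as [K3 [HK3 HB]].
  destruct (Hdet K3) as [k [Hk Hd]].
  set (A := ln (ht (s (k + n)%nat))).
  exists A. split; [apply HB; lia|].
  destruct (HK k ltac:(lia)) as [Her _].
  destruct (HK (k + (n - 1))%nat ltac:(lia)) as [Her' _].
  replace (S (k + (n - 1))) with (k + n)%nat in Her' by lia. fold A in Her'.
  destruct (HK (S k) ltac:(lia)) as [_ Hg]. specialize (Hg (n - 1)%nat).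
  replace (S k + (n - 1))%nat with (k + n)%nat in Hg by lia. fold P A in Hg.
  pose proof (chain_ht_ge1 _ _ _ _ Hs (k + n)%nat).
  apply ln_prod_ge0 in Hd; try apply (chain_er_pos _ _ _ _ Hs); auto; try lra.
  fold A in Hd.
  assert (Ha1 : A / P - INR (n - 1) * ln 2 <= ln (ht (s (S k)))).
  { apply (Rmult_le_reg_l P); auto.
    replace (P * (A / P - INR (n - 1) * ln 2)) with (A - P * (INR (n - 1) * ln 2)) by (field; lra).
    lra. }
  assert (Hb : INR (n - 1) * ln (er (s k)) <=
               INR (n - 1) * (nu * ln 2 - nu * (A / P - INR (n - 1) * ln 2))).
  { apply Rmult_le_compat_l; auto.
    assert (nu * (A / P - INR (n - 1) * ln 2) <= nu * ln (ht (s (S k))))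
      by (apply Rmult_le_compat_l; lra). lra. }
  replace (INR (n - 1) * (nu * ln 2 - nu * (A / P - INR (n - 1) * ln 2))) with
    (INR (n - 1) * (nu * ln 2 + nu * INR (n - 1) * ln 2) - INR (n - 1) * (nu / P) * A) in Hb
    by (field; lra).
  nra.
Qed.

Lemma chain_w_poly_bound w wh C : (1 <= n)%nat ->
  is_lub (approx_set n ht er 1) w -> is_lub (unif_approx_set n ht er 1) wh ->
  unif_approx_set n ht er 1 0 -> 0 < C ->
  (forall K, exists k, (K <= k)%nat /\
     1 <= C * er (s k) * ht (s (S k)) * ht (s (k + n)%nat) ^ (n - 1)) ->
  wh ^ n <= wh ^ (n - 1) + INR (n - 1) * w ^ (n - 1).
Proof.
  intros Hn Hw Hwh H0 HC Hdet.
  assert (Hwh0 : 0 <= wh) by (apply (proj1 Hwh); auto).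
  assert (Hww : wh <= w) by (eapply unif_lub_le_lub; eauto).
  assert (Hn1 : 0 <= INR (n - 1)) by apply pos_INR.
  assert (0 <= w ^ (n - 1)) by (apply pow_le; lra).
  rewrite (pow_pred n) by auto.
  destruct (Rle_dec wh 1) as [Hw1|Hw1].
  { assert (0 <= wh ^ (n - 1)) by (apply pow_le; auto).
    assert (wh * wh ^ (n - 1) <= 1 * wh ^ (n - 1)) by (apply Rmult_le_compat_r; auto). nra. }
  assert (Hnu : forall nu, 0 < nu -> nu < wh ->
            nu * nu ^ (n - 1) - nu ^ (n - 1) <= INR (n - 1) * w ^ (n - 1)).
  { intros nu Hnu0 Hnu1.
    apply (ge_at_of_ge_right (fun mu => INR (n - 1) * mu ^ (n - 1)) w); [reg|].
    intros mu Hmu.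
    assert (Hc := chain_exps_of_det_er_ht w nu mu C Hn Hw
                    (unif_approx_set_of_lt _ _ _ _ _ _ Hwh Hnu1) ltac:(lra) Hmu HC Hdet).
    rewrite pow_div in Hc.
    assert (0 < nu ^ (n - 1)) by (apply pow_lt; auto).
    apply (Rmult_le_compat_r (nu ^ (n - 1))) in Hc; [|lra].
    replace ((1 + INR (n - 1) * (mu ^ (n - 1) / nu ^ (n - 1))) * nu ^ (n - 1))
      with (nu ^ (n - 1) + INR (n - 1) * mu ^ (n - 1)) in Hc by (field; lra).
    lra. }
  enough (wh * wh ^ (n - 1) - wh ^ (n - 1) <= INR (n - 1) * w ^ (n - 1)) by lra.
  apply (le_at_of_le_left (fun x => x * x ^ (n - 1) - x ^ (n - 1)) wh _ wh); [reg|lra|].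
  intros x Hx1 Hx2. apply Hnu; lra.
Qed.

Lemma chain_lambda_poly_bound w wh C : (1 <= n)%nat ->
  is_lub (approx_set n ht er 1) w -> is_lub (unif_approx_set n ht er 1) wh ->
  unif_approx_set n ht er 1 0 -> 0 < C ->
  (forall K, exists k, (K <= k)%nat /\
     1 <= C * ht (s (k + n)%nat) * er (s (k + (n - 1))%nat) * er (s k) ^ (n - 1)) ->
  wh * w ^ (n - 1) + INR (n - 1) * wh ^ n <= w ^ (n - 1).
Proof.
  intros Hn Hw Hwh H0 HC Hdet.
  assert (Hww : wh <= w) by (eapply unif_lub_le_lub; eauto).
  assert (Hn1 : 0 <= INR (n - 1)) by apply pos_INR.
  rewrite (pow_pred n) by auto.
  destruct (proj1 Hwh 0 H0) as [Hwp|<-].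
  2: { assert (0 <= w ^ (n - 1)) by (apply pow_le; lra). lra. }
  assert (Hnu : forall nu, 0 < nu -> nu < wh ->
            nu * w ^ (n - 1) + INR (n - 1) * (nu * nu ^ (n - 1)) <= w ^ (n - 1)).
  { intros nu Hnu0 Hnu1.
    enough (INR (n - 1) * (nu * nu ^ (n - 1)) <= w ^ (n - 1) - nu * w ^ (n - 1)) by lra.
    apply (ge_at_of_ge_right (fun mu => mu ^ (n - 1) - nu * mu ^ (n - 1)) w); [reg|].
    intros mu Hmu.
    assert (Hc := chain_exps_of_det_ht_er w nu mu C Hn Hw
                    (unif_approx_set_of_lt _ _ _ _ _ _ Hwh Hnu1) ltac:(lra) Hmu HC Hdet).
    rewrite pow_div in Hc.
    assert (0 < mu ^ (n - 1)) by (apply pow_lt; lra).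
    assert (0 < nu ^ (n - 1)) by (apply pow_lt; lra).
    apply (Rmult_le_compat_r (mu ^ (n - 1))) in Hc; [|lra].
    replace ((nu + INR (n - 1) * (nu / (mu ^ (n - 1) / nu ^ (n - 1)))) * mu ^ (n - 1))
      with (nu * mu ^ (n - 1) + INR (n - 1) * (nu * nu ^ (n - 1))) in Hc by (field; lra).
    lra. }
  apply (le_at_of_le_left (fun x => x * w ^ (n - 1) + INR (n - 1) * (x * x ^ (n - 1))) wh _ wh);
    [reg|lra|].
  intros x Hx1 Hx2. apply Hnu; lra.
Qed.

Lemma chain_exps_lub_ge w wh : is_lub (approx_set n ht er 1) w ->
  is_lub (unif_approx_set n ht er 1) wh -> unif_approx_set n ht er 1 0 ->
  often_indep_blocks n (S n) s ->
  forall (i : nat) (wi : R), (1 <= i <= S n)%nat -> is_lub (approx_set n ht er i) wi ->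
    powerRZ wh (Z.of_nat i - 1) / powerRZ w (Z.of_nat i - 2) <= wi.
Proof.
  intros Hw Hwh H0 Hinf i wi Hi Hwi.
  destruct (Nat.eq_dec i 1) as [->|Hi1].
  - rewrite (is_lub_u _ _ _ Hwi Hw). simpl. unfold Rdiv. rewrite Rmult_1_l, Rmult_1_r, Rinv_inv. lra.
  - replace (Z.of_nat i - 1)%Z with (Z.of_nat (i - 1)) by lia.
    replace (Z.of_nat i - 2)%Z with (Z.of_nat (i - 2)) by lia.
    rewrite <- !pow_powerRZ.
    apply (chain_block_lub w wh i wi); auto; [lia|].
    intros K. destruct (Hinf K) as [k [Hk Hl]]. exists k. split; auto.
    eapply lin_indep_prefix; [|eauto]. lia.
Qed.

End ChainExponents.

Definition abs_homogeneous (n : nat) (f : zvec -> R) : Prop :=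
  forall u v t, (forall i, (i <= n)%nat -> coordR u i = t * coordR v i) -> f u = Rabs t * f v.

Lemma lin_indep2_coeffs n V x y : lin_indep n 2 V ->
  (forall i, (i <= n)%nat -> x * coordR (V 0%nat) i + y * coordR (V 1%nat) i = 0) -> x = 0 /\ y = 0.
Proof.
  intros HV Hxy.
  set (c := fun m => if Nat.eqb m 0 then x else y).
  assert (Hc : forall i, (i <= n)%nat -> rsum (fun k => c k * IZR (V k i)) 2 = 0).
  { intros i Hi. rewrite rsum_2. apply Hxy; auto. }
  split; [apply (HV c Hc 0%nat)|apply (HV c Hc 1%nat)]; lia.
Qed.

Lemma chain_pair_indep n ht er s : best_chain n ht er s ->
  abs_homogeneous n ht -> abs_homogeneous n er ->
  forall k, lin_indep n 2 (fun m => s (k + m)%nat).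
Proof.
  intros Hs Hht Her k c Hc m Hm.
  assert (Hc' : forall i, (i <= n)%nat -> c 0%nat * coordR (s k) i + c 1%nat * coordR (s (S k)) i = 0).
  { intros i Hi. specialize (Hc i Hi). rewrite rsum_2, Nat.add_0_r, Nat.add_1_r in Hc. exact Hc. }
  assert (H1 : c 1%nat = 0).
  { apply NNPP. intros H1. set (t := - c 0%nat / c 1%nat).
    assert (Hr : forall i, (i <= n)%nat -> coordR (s (S k)) i = t * coordR (s k) i).
    { intros i Hi. specialize (Hc' i Hi). unfold t.
      apply (Rmult_eq_reg_l (c 1%nat)); auto. field_simplify; auto. lra. }
    (* [s (S k) = t s k] with [|t| < 1] from the errors and [|t| >= 1] from the heights *)
    assert (E1 := Hht _ _ _ Hr). assert (E2 := Her _ _ _ Hr).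
    pose proof (chain_er_lt _ _ _ _ Hs k). pose proof (chain_ht_le _ _ _ _ Hs k).
    pose proof (chain_er_pos _ _ _ _ Hs k). pose proof (chain_ht_ge1 _ _ _ _ Hs k).
    assert (Rabs t < 1) by (apply (Rmult_lt_reg_r (er (s k))); lra).
    assert (Rabs t * ht (s k) < 1 * ht (s k)) by (apply Rmult_lt_compat_r; lra). lra. }
  assert (H0 : c 0%nat = 0).
  { destruct (chain_nonzero _ _ _ _ Hs k) as [i [Hi Hv]]. specialize (Hc' i Hi).
    rewrite H1, Rmult_0_l, Rplus_0_r in Hc'. apply Rmult_integral in Hc'.
    destruct Hc' as [|Hc']; auto. exfalso. apply Hv, eq_IZR, Hc'. }
  destruct m as [|[|m]]; auto; lia.
Qed.

Lemma dependent_triple_span n V : lin_indep n 2 V -> ~ lin_indep n 3 V ->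
  exists al be, forall i, (i <= n)%nat ->
    coordR (V 2%nat) i = al * coordR (V 0%nat) i + be * coordR (V 1%nat) i.
Proof.
  intros H2 H3.
  apply not_all_ex_not in H3. destruct H3 as [c Hc].
  apply imply_to_and in Hc. destruct Hc as [Hc Hnz].
  apply not_all_ex_not in Hnz. destruct Hnz as [k Hk].
  apply imply_to_and in Hk. destruct Hk as [Hk Hck].
  assert (Hc2 : c 2%nat <> 0).
  { intros Hz. apply Hck.
    destruct (lin_indep2_coeffs n V (c 0%nat) (c 1%nat) H2) as [E0 E1].
    { intros i Hi. specialize (Hc i Hi). rewrite rsum_3, Hz in Hc. unfold coordR. lra. }
    destruct k as [|[|[|k]]]; auto; lia. }
  exists (- c 0%nat / c 2%nat), (- c 1%nat / c 2%nat). intros i Hi.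
  specialize (Hc i Hi). rewrite rsum_3 in Hc. unfold coordR.
  apply (Rmult_eq_reg_l (c 2%nat)); auto. field_simplify; auto. lra.
Qed.

Lemma tail_in_plane n (s : nat -> zvec) K :
  (forall k, lin_indep n 2 (fun m => s (k + m)%nat)) ->
  (forall k, (K <= k)%nat -> ~ lin_indep n 3 (fun m => s (k + m)%nat)) ->
  forall k, (K <= k)%nat -> exists a b, forall i, (i <= n)%nat ->
    coordR (s k) i = a * coordR (s K) i + b * coordR (s (S K)) i.
Proof.
  intros H2 H3.
  set (in_plane := fun v : zvec => exists a b, forall i, (i <= n)%nat ->
                     coordR v i = a * coordR (s K) i + b * coordR (s (S K)) i).
  assert (Hm : forall m, in_plane (s (K + m)%nat) /\ in_plane (s (S (K + m)))).
  { induction m as [|m [[a1 [b1 E1]] [a2 [b2 E2]]]].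
    - rewrite Nat.add_0_r. split; [exists 1, 0|exists 0, 1]; intros; ring.
    - rewrite Nat.add_succ_r. split; [exists a2, b2; auto|].
      destruct (dependent_triple_span n _ (H2 (K + m)%nat) (H3 (K + m)%nat ltac:(lia))) as [al [be E]].
      exists (al * a1 + be * a2), (al * b1 + be * b2). intros i Hi. specialize (E i Hi).
      replace (K + m + 2)%nat with (S (S (K + m))) in E by lia.
      replace (K + m + 1)%nat with (S (K + m)) in E by lia.
      rewrite Nat.add_0_r in E. rewrite E, E1, E2 by auto. ring. }
  intros k Hk. replace k with (K + (k - K))%nat by lia. apply Hm.
Qed.

Lemma indep_pair_minor n V : lin_indep n 2 V -> exists r t, (r <= n)%nat /\ (t <= n)%nat /\
  (V 0%nat r * V 1%nat t - V 0%nat t * V 1%nat r)%Z <> 0%Z.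
Proof.
  intros H2. apply NNPP. intros Hn.
  destruct (lin_indep_nonzero n V (lin_indep_prefix n 2 1 V ltac:(lia) H2)) as [r [Hr Hv]].
  destruct (lin_indep2_coeffs n V (IZR (V 1%nat r)) (- IZR (V 0%nat r)) H2) as [_ E].
  2: { apply Hv, eq_IZR. simpl. lra. }
  intros i Hi. unfold coordR.
  assert (Hm : (V 0%nat r * V 1%nat i - V 0%nat i * V 1%nat r)%Z = 0%Z)
    by (apply NNPP; intros Hne; apply Hn; exists r, i; auto).
  apply (f_equal IZR) in Hm. rewrite minus_IZR, !mult_IZR in Hm. lra.
Qed.

Lemma minor_le_heights n u u' r t : (r <= n)%nat -> (t <= n)%nat ->
  Rabs (coordR u r * coordR u' t - coordR u t * coordR u' r) <= 2 * height n u * height n u'.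
Proof.
  intros Hr Ht. eapply Rle_trans; [apply Rabs_sub_le|]. rewrite !Rabs_mult. unfold coordR.
  pose proof (height_ub n u r Hr). pose proof (height_ub n u t Ht).
  pose proof (height_ub n u' r Hr). pose proof (height_ub n u' t Ht).
  assert (Rabs (IZR (u r)) * Rabs (IZR (u' t)) <= height n u * height n u')
    by (apply Rmult_le_compat; auto using Rabs_pos).
  assert (Rabs (IZR (u t)) * Rabs (IZR (u' r)) <= height n u * height n u')
    by (apply Rmult_le_compat; auto using Rabs_pos).
  lra.
Qed.

Lemma plane_coeffs_det_neq0 n (V W : nat -> zvec) a b a' b' : lin_indep n 2 W ->
  (forall i, (i <= n)%nat -> coordR (W 0%nat) i = a * coordR (V 0%nat) i + b * coordR (V 1%nat) i) ->
  (forall i, (i <= n)%nat -> coordR (W 1%nat) i = a' * coordR (V 0%nat) i + b' * coordR (V 1%nat) i) ->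
  a * b' - a' * b <> 0.
Proof.
  intros HW Eab Eab' Hab.
  destruct (lin_indep2_coeffs n W b' (- b) HW) as [Hb1 Hb2].
  { intros i Hi. rewrite (Eab i), (Eab' i) by auto.
    replace (b' * (a * coordR (V 0%nat) i + b * coordR (V 1%nat) i) +
             - b * (a' * coordR (V 0%nat) i + b' * coordR (V 1%nat) i))
      with ((a * b' - a' * b) * coordR (V 0%nat) i) by ring. rewrite Hab; ring. }
  destruct (lin_indep2_coeffs n W a' (- a) HW) as [Ha1 Ha2].
  { intros i Hi. rewrite (Eab i), (Eab' i) by auto.
    replace (a' * (a * coordR (V 0%nat) i + b * coordR (V 1%nat) i) +
             - a * (a' * coordR (V 0%nat) i + b' * coordR (V 1%nat) i))
      with (- (a * b' - a' * b) * coordR (V 1%nat) i) by ring. rewrite Hab; ring. }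
  destruct (lin_indep2_coeffs n W 1 0 HW) as [E _]; [|lra].
  intros i Hi. rewrite (Eab i) by auto. replace a with 0 by lra. replace b with 0 by lra. ring.
Qed.

(** * Best approximations for the linear form *)

Fixpoint zmax (f : nat -> Z) (m : nat) : Z :=
  match m with O => 0%Z | S p => Z.max (zmax f p) (f p) end.

Lemma zmax_ge0 f m : (0 <= zmax f m)%Z.
Proof. induction m; simpl; lia. Qed.

Lemma rmax_IZR f m : rmax (fun i => IZR (f i)) m = IZR (zmax f m).
Proof.
  induction m; simpl; auto. rewrite IHm.
  destruct (Z.max_spec (zmax f m) (f m)) as [[H1 ->]|[H1 ->]];
    [apply Rmax_right|apply Rmax_left]; apply IZR_le; lia.
Qed.

Definition height_nat (n : nat) (v : zvec) : nat := Z.to_nat (zmax (fun i => Z.abs (v i)) (S n)).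

Lemma height_nat_lt n u v : height n u < height n v -> (height_nat n u < height_nat n v)%nat.
Proof.
  assert (E : forall w, height n w = IZR (zmax (fun i => Z.abs (w i)) (S n))).
  { intros w. unfold height. rewrite <- rmax_IZR. apply rmax_ext. intros. apply Rabs_Zabs. }
  rewrite !E. intros H. apply lt_IZR in H. unfold height_nat.
  pose proof (zmax_ge0 (fun i => Z.abs (u i)) (S n)). lia.
Qed.

Definition infinitely_often (P : nat -> Prop) : Prop := forall K, exists k, (K <= k)%nat /\ P k.

Lemma infinitely_often_fiber (f : nat -> Z) a m : forall P, infinitely_often P ->
  (forall k, P k -> (a <= f k <= a + Z.of_nat m)%Z) ->
  exists z, infinitely_often (fun k => P k /\ f k = z).
Proof.
  induction m; intros P HP Hb.
  - exists a. intros K. destruct (HP K) as [k [Hk Pk]]. exists k.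
    specialize (Hb k Pk). split; [|split]; auto; lia.
  - set (top := (a + Z.of_nat (S m))%Z).
    destruct (classic (infinitely_often (fun k => P k /\ f k = top))) as [Hi|Hi]; [eauto|].
    apply not_all_ex_not in Hi. destruct Hi as [K0 HK0].
    destruct (IHm (fun k => P k /\ (K0 <= k)%nat)) as [z Hz].
    + intros K. destruct (HP (Nat.max K K0)) as [k [Hk Pk]]. exists k. split; [lia|split; auto; lia].
    + intros k [Pk Hk]. specialize (Hb k Pk).
      destruct (Z.eq_dec (f k) top); [exfalso; apply HK0; exists k; auto|]. unfold top in *. lia.
    + exists z. intros K. destruct (Hz K) as [k [Hk [[Pk _] E]]]. eauto.
Qed.

Lemma infinitely_often_const_prefix (s : nat -> zvec) Bz m :
  (forall k i, (i < m)%nat -> (Z.abs (s k i) <= Bz)%Z) ->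
  exists P, infinitely_often P /\ exists v : zvec, forall k, P k -> forall i, (i < m)%nat -> s k i = v i.
Proof.
  induction m; intros Hb.
  - exists (fun _ => True). split; [intros K; exists K; auto|]. exists (fun _ => 0%Z). intros; lia.
  - destruct IHm as [P [HP [v Hv]]]; [intros; apply Hb; lia|].
    destruct (infinitely_often_fiber (fun k => s k m) (- Bz) (Z.to_nat (2 * Bz)) P HP) as [z Hz].
    { intros k _. specialize (Hb k m ltac:(lia)). lia. }
    exists (fun k => P k /\ s k m = z). split; auto.
    exists (fun i => if Nat.eqb i m then z else v i). intros k [Pk Ek] i Hi.
    destruct (Nat.eqb_spec i m); [subst; auto|]. apply Hv; auto; lia.
Qed.

Lemma bounded_height_repeats n (s : nat -> zvec) B : (forall k, height n (s k) <= B) ->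
  exists k1 k2, (k1 < k2)%nat /\ forall i, (i <= n)%nat -> s k1 i = s k2 i.
Proof.
  intros HB.
  destruct (infinitely_often_const_prefix s (up B) (S n)) as [P [HP [v Hv]]].
  { intros k i Hi. pose proof (height_ub n (s k) i ltac:(lia)). specialize (HB k).
    rewrite Rabs_Zabs in H. destruct (archimed B). apply le_IZR. lra. }
  destruct (HP 0%nat) as [k1 [_ P1]]. destruct (HP (S k1)) as [k2 [H2 P2]].
  exists k1, k2. split; [lia|]. intros i Hi. rewrite (Hv k1), (Hv k2); auto; lia.
Qed.

Lemma frac_pigeonhole (f : nat -> R) M : (1 <= M)%nat -> (forall c, 0 <= f c < 1) ->
  exists c c', (c < S M)%nat /\ (c' < S M)%nat /\ c <> c' /\ Rabs (f c - f c') < / INR M.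
Proof.
  intros HM Hf.
  assert (HMr : 1 <= INR M) by (apply (le_INR 1); lia).
  set (idx := fun c => Z.to_nat (Int_part (INR M * f c))).
  assert (Hidx : forall c, IZR (Int_part (INR M * f c)) = INR (idx c)).
  { intros c. unfold idx. rewrite (INR_IZR_INZ (Z.to_nat _)), Znat.Z2Nat.id; auto.
    destruct (base_Int_part (INR M * f c)). specialize (Hf c).
    assert (IZR (-1) < IZR (Int_part (INR M * f c))) by nra. apply lt_IZR in H1. lia. }
  assert (Hnd : ~ NoDup (map idx (seq 0 (S M)))).
  { intros Hnd. assert (Hinc : incl (map idx (seq 0 (S M))) (seq 0 M)).
    { intros x Hx. apply in_map_iff in Hx. destruct Hx as [c [<- _]]. apply in_seq.
      destruct (base_Int_part (INR M * f c)). specialize (Hf c). rewrite Hidx in *.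
      assert (INR (idx c) < INR M) by nra. apply INR_lt in H1. lia. }
    apply NoDup_incl_length in Hinc; auto. rewrite length_map, !length_seq in Hinc. lia. }
  assert (Hcol : exists c c', In c (seq 0 (S M)) /\ In c' (seq 0 (S M)) /\ c <> c' /\ idx c = idx c').
  { apply NNPP. intros Hn. apply Hnd. apply NoDup_map_NoDup_ForallPairs; [|apply seq_NoDup].
    intros x y Hx Hy Hxy. apply NNPP. intros Hne. apply Hn. eauto 6. }
  destruct Hcol as [c [c' [Hc [Hc' [Hne E]]]]]. apply in_seq in Hc, Hc'.
  exists c, c'. repeat split; try lia.
  destruct (base_Int_part (INR M * f c)) as [A1 A2]. destruct (base_Int_part (INR M * f c')) as [B1 B2].
  rewrite Hidx in A1, A2. rewrite Hidx in B1, B2. rewrite E in A1, A2.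
  apply (Rmult_lt_reg_l (INR M)); [lra|]. rewrite Rinv_r by lra.
  rewrite <- (Rabs_right (INR M)) by lra. rewrite <- Rabs_mult. apply Rabs_def1; lra.
Qed.

Definition zvec3 (x y0 y1 : Z) : zvec :=
  fun i => match i with O => x | 1%nat => y0 | 2%nat => y1 | _ => 0%Z end.

Lemma linform_zvec3 n zeta x y0 y1 : (2 <= n)%nat ->
  linform n zeta (zvec3 x y0 y1) = IZR x + zeta 0%nat * IZR y0 + zeta 1%nat * IZR y1.
Proof.
  intros Hn. unfold linform. rewrite (rsum_pad0 _ 2 n); auto.
  - simpl. ring.
  - intros i Hi. destruct i as [|[|i]]; [lia|lia|]. simpl. ring.
Qed.

Lemma height_zvec3 n x y0 y1 B : 0 <= B ->
  Rabs (IZR x) <= B -> Rabs (IZR y0) <= B -> Rabs (IZR y1) <= B -> height n (zvec3 x y0 y1) <= B.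
Proof.
  intros HB Hx H0 H1. apply height_lub; auto.
  intros [|[|[|i]]] _; simpl; auto. rewrite Rabs_R0. auto.
Qed.

Lemma pair_pigeonhole (f : nat -> nat -> R) N : (1 <= N)%nat -> (forall a b, 0 <= f a b < 1) ->
  exists a b a' b', (a <= N)%nat /\ (b <= N)%nat /\ (a' <= N)%nat /\ (b' <= N)%nat /\
    (a <> a' \/ b <> b') /\ Rabs (f a b - f a' b') < / INR N ^ 2.
Proof.
  intros HN Hf. set (Q := S N).
  assert (HNr : 1 <= INR N) by (apply (le_INR 1); auto).
  destruct (frac_pigeonhole (fun c => f (c / Q) (c mod Q))%nat (Q * Q - 1)) as [c [c' [Hc [Hc' [Hcc Hd]]]]];
    [unfold Q; nia|auto|].
  replace (S (Q * Q - 1)) with (Q * Q)%nat in Hc, Hc' by (unfold Q; nia).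
  assert (Hdiv : forall d, (d < Q * Q)%nat -> (d / Q <= N)%nat /\ (d mod Q <= N)%nat).
  { intros d Hdq. split; [assert (d / Q < Q)%nat by (apply Nat.Div0.div_lt_upper_bound; lia)
                         |assert (d mod Q < Q)%nat by (apply Nat.mod_upper_bound; lia)]; unfold Q in *; lia. }
  exists (c / Q)%nat, (c mod Q)%nat, (c' / Q)%nat, (c' mod Q)%nat.
  destruct (Hdiv c Hc), (Hdiv c' Hc'). repeat split; auto.
  - destruct (Nat.eq_dec (c / Q) (c' / Q)) as [Ea|Ea]; [right|left; auto]. intros Eb. apply Hcc.
    rewrite (Nat.div_mod_eq c Q), (Nat.div_mod_eq c' Q), Ea, Eb. reflexivity.
  - eapply Rlt_le_trans; [apply Hd|]. apply Rinv_le_contravar; [apply pow_lt; lra|].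
    unfold Q. rewrite minus_INR by nia. rewrite mult_INR, S_INR. simpl. nra.
Qed.

Lemma dirichlet2 n zeta N : (2 <= n)%nat -> (1 <= N)%nat ->
  exists w, nonzero n w /\ height n w <= (1 + Rabs (zeta 0%nat) + Rabs (zeta 1%nat)) * INR N /\
    Rabs (linform n zeta w) <= / (INR N) ^ 2.
Proof.
  intros Hn HN.
  set (p := fun a b : nat => INR a * zeta 0%nat + INR b * zeta 1%nat).
  destruct (pair_pigeonhole (fun a b => frac_part (p a b)) N HN) as [a [b [a' [b' [Ha [Hb [Ha' [Hb' [Hne Hd]]]]]]]]].
  { intros a b. destruct (base_fp (p a b)). lra. }
  exists (zvec3 (Int_part (p a' b') - Int_part (p a b)) (Z.of_nat a - Z.of_nat a') (Z.of_nat b - Z.of_nat b')).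
  assert (Hnat : forall x y, (x <= N)%nat -> (y <= N)%nat -> Rabs (INR x - INR y) <= INR N).
  { intros x y Hx Hy. apply le_INR in Hx, Hy. pose proof (pos_INR x). pose proof (pos_INR y).
    apply Rabs_le. lra. }
  assert (HNr : 1 <= INR N) by (apply (le_INR 1); auto).
  split; [|split].
  - destruct Hne as [Ea|Eb]; [exists 1%nat|exists 2%nat]; split; try lia; simpl; lia.
  - pose proof (Rabs_pos (zeta 0%nat)). pose proof (Rabs_pos (zeta 1%nat)).
    apply height_zvec3; try (rewrite minus_IZR, <- !INR_IZR_INZ; eapply Rle_trans; [apply Hnat; auto|nra]);
      [nra|].
    assert (Hp : Rabs (p a' b' - p a b) <= INR N * (Rabs (zeta 0%nat) + Rabs (zeta 1%nat))).
    { replace (p a' b' - p a b) with ((INR a' - INR a) * zeta 0%nat + (INR b' - INR b) * zeta 1%nat)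
        by (unfold p; ring).
      eapply Rle_trans; [apply Rabs_triang|]. rewrite !Rabs_mult.
      pose proof (Hnat a' a Ha' Ha). pose proof (Hnat b' b Hb' Hb). nra. }
    destruct (base_fp (p a b)). destruct (base_fp (p a' b')). unfold frac_part in *.
    rewrite minus_IZR. apply Rabs_le. pose proof (Rle_abs (p a' b' - p a b)).
    pose proof (Rle_abs (- (p a' b' - p a b))). rewrite Rabs_Ropp in *. nra.
  - rewrite linform_zvec3 by auto. rewrite !minus_IZR, <- !INR_IZR_INZ.
    replace (IZR (Int_part (p a' b')) - IZR (Int_part (p a b)) + zeta 0%nat * (INR a - INR a') +
             zeta 1%nat * (INR b - INR b')) with (frac_part (p a b) - frac_part (p a' b'))
      by (unfold frac_part, p; ring).
    left. exact Hd.
Qed.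

Section LinearForm.
Variables (n : nat) (zeta : nat -> R).

Lemma Q2R_inject_Z z : Q2R (inject_Z z) = IZR z.
Proof. unfold Q2R, inject_Z. simpl. field. Qed.

Lemma linform_neq0 u : Q_lin_indep_1 n zeta -> nonzero n u -> linform n zeta u <> 0.
Proof.
  intros HQ [i [Hi Hu]] HL. apply Hu.
  destruct (HQ (inject_Z (u 0%nat)) (fun i => inject_Z (u (S i)))) as [H0 H1].
  { rewrite Q2R_inject_Z, <- HL. unfold linform. f_equal. apply rsum_ext.
    intros; rewrite Q2R_inject_Z; ring. }
  rewrite Q2R_inject_Z in H0. destruct i as [|i]; apply eq_IZR; auto.
  specialize (H1 i ltac:(lia)). rewrite Q2R_inject_Z in H1. auto.
Qed.

Lemma abs_homogeneous_height : abs_homogeneous n (height n).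
Proof. intros u v t H. apply height_scale; auto. Qed.

Lemma abs_homogeneous_linform : abs_homogeneous n (fun v => Rabs (linform n zeta v)).
Proof. intros u v t H. simpl. rewrite (linform_scale n zeta u v t), Rabs_mult; auto. Qed.

Lemma linform_decreasing_ht_unbounded (s : nat -> zvec) :
  (forall k, Rabs (linform n zeta (s (S k))) < Rabs (linform n zeta (s k))) ->
  forall B, exists k, B < height n (s k).
Proof.
  intros Hs B. apply NNPP. intros Hn.
  destruct (bounded_height_repeats n s B) as [k1 [k2 [Hk E]]].
  { intros k. apply Rnot_lt_le. intros H. apply Hn. eauto. }
  assert (Hlt := decreasing_seq_lt (fun k => Rabs (linform n zeta (s k))) Hs k1 k2 Hk).
  cbv beta in Hlt.
  rewrite (abs_homogeneous_linform (s k1) (s k2) 1), Rabs_R1 in Hlt; [lra|].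
  intros i Hi. unfold coordR. rewrite E by auto. ring.
Qed.

Lemma sign_height_linform u v : same_up_to_sign n u v ->
  height n u = height n v /\ Rabs (linform n zeta u) = Rabs (linform n zeta v).
Proof.
  intros H. destruct (sign_coordR n u v H) as [t [Ht E]].
  rewrite (abs_homogeneous_height u v t), (abs_homogeneous_linform u v t), Ht by auto. split; ring.
Qed.

Lemma best_approx_seq_chain bv : Q_lin_indep_1 n zeta -> best_approx_seq n zeta bv ->
  best_chain n (height n) (fun v => Rabs (linform n zeta v)) bv.
Proof.
  intros HQ [Hba [Henum Hmon]].
  assert (Hhm : forall k, height n (bv k) <= height n (bv (S k))) by (intro k; apply Hmon).
  assert (Hes : forall k, Rabs (linform n zeta (bv (S k))) < Rabs (linform n zeta (bv k)))
    by (intro k; apply Hmon).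
  constructor; auto.
  - intros k u Hu Hh. apply Rnot_lt_le. intros Hlt.
    (* a vector of least height beating [bv k] would be a best approximation strictly between
       [bv k] and [bv (S k)] *)
    destruct (ex_minimizer (height_nat n) (fun w => nonzero n w /\ height n w < height n (bv (S k)) /\
                Rabs (linform n zeta w) < Rabs (linform n zeta (bv k)))) as [w [[Hw1 [Hw2 Hw3]] Hmin]];
      [exists u; auto|].
    assert (Hbw : best_approx n zeta w).
    { split; auto. intros u' Hu' Hh'. apply Rnot_le_lt. intros Hle.
      assert (Hm := Hmin u' ltac:(repeat split; auto; lra)). apply height_nat_lt in Hh'. lia. }
    destruct (Henum w Hbw) as [j Hj]. destruct (sign_height_linform w (bv j) Hj) as [E1 E2].
    destruct (Compare_dec.le_lt_dec j k) as [Hjk|Hjk].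
    + pose proof (decreasing_seq_le (fun k => Rabs (linform n zeta (bv k))) Hes j k Hjk). simpl in *. lra.
    + pose proof (increasing_seq_le (fun k => height n (bv k)) Hhm (S k) j Hjk). simpl in *. lra.
  - apply linform_decreasing_ht_unbounded; auto.
  - intros k. apply Rabs_pos_lt, linform_neq0; auto. apply Hba.
  - intros k. apply height_ge1, Hba.
  - intros k. apply Hba.
Qed.

Lemma ex_next_best_approx v : (2 <= n)%nat -> Q_lin_indep_1 n zeta -> best_approx n zeta v ->
  exists w, best_approx n zeta w /\ Rabs (linform n zeta w) < Rabs (linform n zeta v) /\
    height n v <= height n w /\
    forall u, nonzero n u -> height n u < height n w -> Rabs (linform n zeta v) <= Rabs (linform n zeta u).
Proof.
  intros Hn HQ [Hv Hvb].
  set (Lv := Rabs (linform n zeta v)).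
  assert (HLv : 0 < Lv) by (apply Rabs_pos_lt, linform_neq0; auto).
  destruct (archimed_cor1 Lv HLv) as [N [HN HN0]].
  destruct (dirichlet2 n zeta N Hn ltac:(lia)) as [u [Hu [_ HuL]]].
  assert (HNr : 1 <= INR N) by (apply (le_INR 1); lia).
  assert (HuLv : Rabs (linform n zeta u) < Lv).
  { eapply Rle_lt_trans; [apply HuL|]. eapply Rle_lt_trans; [|apply HN].
    apply Rinv_le_contravar; [lra|]. simpl. nra. }
  destruct (ex_minimizer (height_nat n) (fun w => nonzero n w /\ Rabs (linform n zeta w) < Lv))
    as [w [[Hw1 Hw2] Hmin]]; [exists u; auto|].
  assert (Hbelow : forall u', nonzero n u' -> height n u' < height n w -> Lv <= Rabs (linform n zeta u')).
  { intros u' Hu' Hh'. apply Rnot_lt_le. intros Hlt.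
    assert (Hm := Hmin u' ltac:(split; auto)). apply height_nat_lt in Hh'. lia. }
  exists w. split; [|split; [|split]]; auto.
  - split; auto. intros u' Hu' Hh'. assert (Hb := Hbelow u' Hu' Hh'). lra.
  - apply Rnot_lt_le. intros Hlt. assert (Hc := Hvb w Hw1 Hlt). fold Lv in Hc. lra.
Qed.

Lemma ex_linform_best_chain : (2 <= n)%nat -> Q_lin_indep_1 n zeta ->
  exists s, best_chain n (height n) (fun v => Rabs (linform n zeta v)) s.
Proof.
  intros Hn HQ.
  assert (He0 : best_approx n zeta (zvec3 1 0 0)).
  { split; [exists 0%nat; split; [lia|discriminate]|].
    intros u Hu Hh. exfalso. pose proof (height_ge1 n u Hu).
    assert (height n (zvec3 1 0 0) <= 1) by (apply height_zvec3; simpl; rewrite ?Rabs_R1, ?Rabs_R0; lra).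
    lra. }
  destruct (ex_iterate (best_approx n zeta) _ _ He0 (fun v Hv => ex_next_best_approx v Hn HQ Hv))
    as [s [_ Hs]].
  assert (Hlt : forall k, Rabs (linform n zeta (s (S k))) < Rabs (linform n zeta (s k)))
    by (intros k; apply (Hs k)).
  exists s. constructor; auto.
  - intros k. apply (Hs k).
  - intros k. apply (Hs k).
  - apply linform_decreasing_ht_unbounded; auto.
  - intros k. apply Rabs_pos_lt, linform_neq0; auto. apply (Hs k).
  - intros k. apply height_ge1, (Hs k).
  - intros k. apply (Hs k).
Qed.

Lemma linform_unif_exp0 : unif_approx_set n (height n) (fun v => Rabs (linform n zeta v)) 1 0.
Proof.
  apply (unif_approx_set_zero _ _ _ (fun i => if Nat.eqb i 0 then 1%Z else 0%Z)).
  - exists 0%nat. split; [lia|discriminate].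
  - apply height_lub; [lra|]. intros i Hi. destruct (Nat.eqb i 0); simpl; rewrite ?Rabs_R1, ?Rabs_R0; lra.
  - unfold linform. rewrite rsum_eq0; [simpl; rewrite Rplus_0_r, Rabs_R1; lra|].
    intros i Hi. simpl. ring.
Qed.

Lemma linform_chain_er_ht_small s : (2 <= n)%nat ->
  best_chain n (height n) (fun v => Rabs (linform n zeta v)) s ->
  forall eps, 0 < eps -> forall K, exists k, (K <= k)%nat /\
    Rabs (linform n zeta (s k)) * height n (s (S k)) < eps.
Proof.
  intros Hn Hs eps Heps K.
  set (C0 := 1 + Rabs (zeta 0%nat) + Rabs (zeta 1%nat)).
  assert (HC0 : 1 <= C0) by (unfold C0; pose proof (Rabs_pos (zeta 0%nat)); pose proof (Rabs_pos (zeta 1%nat)); lra).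
  destruct (chain_ht_eventually_gt _ _ _ _ Hs (Rmax (4 * C0) (16 * C0 ^ 2 / eps)) K) as [k [Hk HH]].
  exists k. split; auto. set (H := height n (s (S k))).
  assert (HT : Rmax (4 * C0) (16 * C0 ^ 2 / eps) < H) by (apply HH; lia).
  assert (HT1 := Rle_lt_trans _ _ _ (Rmax_l _ _) HT). assert (HT2 := Rle_lt_trans _ _ _ (Rmax_r _ _) HT).
  (* Dirichlet with [N ~ H / (2 C0)] yields a vector of height below [H] *)
  destruct (nat_floor (H / (2 * C0))) as [N [HN1 HN2]]; [apply Rlt_le, Rdiv_lt_0_compat; lra|].
  assert (Hx2 : 2 <= H / (2 * C0)) by (apply (Rmult_le_reg_r (2 * C0)); [lra|]; field_simplify; lra).
  assert (HNx : H / (4 * C0) < INR N).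
  { replace (H / (4 * C0)) with (H / (2 * C0) / 2) by (field; lra). lra. }
  assert (HNpos : 0 < H / (4 * C0)) by (apply Rdiv_lt_0_compat; lra).
  assert (HN : (1 <= N)%nat) by (destruct N; [simpl in HNx; lra|lia]).
  destruct (dirichlet2 n zeta N Hn HN) as [w [Hw [Hwh HwL]]]. fold C0 in Hwh.
  assert (Hlt : height n w < H).
  { eapply Rle_lt_trans; [apply Hwh|]. apply (Rle_lt_trans _ (C0 * (H / (2 * C0)))).
    - apply Rmult_le_compat_l; lra.
    - replace (C0 * (H / (2 * C0))) with (H / 2) by (field; lra). lra. }
  assert (HL := chain_minimal _ _ _ _ Hs k w Hw Hlt). simpl in HL.
  assert (Hinv : / INR N ^ 2 < (4 * C0 / H) ^ 2).
  { replace (4 * C0 / H) with (/ (H / (4 * C0))) by (field; lra). rewrite pow_inv.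
    apply Rinv_lt_contravar; [apply Rmult_lt_0_compat; apply pow_lt; lra|].
    simpl. rewrite !Rmult_1_r. apply Rmult_le_0_lt_compat; lra. }
  assert (Hsmall : Rabs (linform n zeta (s k)) * H < (4 * C0 / H) ^ 2 * H)
    by (apply Rmult_lt_compat_r; lra).
  replace ((4 * C0 / H) ^ 2 * H) with (16 * C0 ^ 2 / H) in Hsmall by (field; lra).
  assert (16 * C0 ^ 2 / H < eps); [|lra].
  apply (Rmult_lt_reg_r H); [lra|]. replace (16 * C0 ^ 2 / H * H) with (16 * C0 ^ 2) by (field; lra).
  apply (Rmult_lt_compat_l eps) in HT2; [|lra]. replace (eps * (16 * C0 ^ 2 / eps)) with (16 * C0 ^ 2) in HT2
    by (field; lra). lra.
Qed.

(* Writing [v = a p + b q] and [v' = a' p + b' q], a nonzero integer minor [D] of [(v, v')]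
   satisfies [D L(p) = b' M L(v) - b M L(v')], where [b M] and [b' M] are minors of [(p, v)]
   and [(p, v')]. *)
Lemma plane_linform_bound (V W : nat -> zvec) a b a' b' :
  lin_indep n 2 V -> lin_indep n 2 W ->
  (forall i, (i <= n)%nat -> coordR (W 0%nat) i = a * coordR (V 0%nat) i + b * coordR (V 1%nat) i) ->
  (forall i, (i <= n)%nat -> coordR (W 1%nat) i = a' * coordR (V 0%nat) i + b' * coordR (V 1%nat) i) ->
  Rabs (linform n zeta (V 0%nat)) <=
    2 * height n (V 0%nat) * (height n (W 1%nat) * Rabs (linform n zeta (W 0%nat)) +
                              height n (W 0%nat) * Rabs (linform n zeta (W 1%nat))).
Proof.
  intros HV HW Eab Eab'.
  destruct (indep_pair_minor n V HV) as [r [t [Hr [Ht HM]]]].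
  set (p := V 0%nat) in *. set (q := V 1%nat) in *. set (v := W 0%nat) in *. set (v' := W 1%nat) in *.
  set (minor := fun u u' => coordR u r * coordR u' t - coordR u t * coordR u' r).
  assert (HMr : minor p q <> 0).
  { unfold minor, coordR. rewrite <- !mult_IZR, <- minus_IZR. intros E. apply HM, eq_IZR, E. }
  assert (I1 : minor p v = b * minor p q) by (unfold minor; rewrite (Eab r), (Eab t) by auto; ring).
  assert (I2 : minor p v' = b' * minor p q) by (unfold minor; rewrite (Eab' r), (Eab' t) by auto; ring).
  assert (ID : minor v v' = (a * b' - a' * b) * minor p q)
    by (unfold minor; rewrite (Eab r), (Eab t), (Eab' r), (Eab' t) by auto; ring).
  assert (HD := plane_coeffs_det_neq0 n V W a b a' b' HW Eab Eab').
  assert (HD1 : 1 <= Rabs (minor v v')).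
  { unfold minor, coordR. rewrite <- !mult_IZR, <- minus_IZR. apply Rabs_IZR_ge1.
    intros E. apply (f_equal IZR) in E. rewrite minus_IZR, !mult_IZR in E.
    fold (coordR v r) (coordR v t) (coordR v' r) (coordR v' t) in E.
    assert (minor v v' = 0) by (unfold minor; simpl in E; lra).
    rewrite ID in H. apply Rmult_integral in H. tauto. }
  assert (Key : b' * minor p q * linform n zeta v - b * minor p q * linform n zeta v' =
                minor v v' * linform n zeta p).
  { rewrite ID, (linform_comb n zeta v p q a b Eab), (linform_comb n zeta v' p q a' b' Eab'). ring. }
  assert (B1 := minor_le_heights n p v r t Hr Ht). assert (B2 := minor_le_heights n p v' r t Hr Ht).
  fold (minor p v) in B1. fold (minor p v') in B2. rewrite I1 in B1. rewrite I2 in B2.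
  apply (Rle_trans _ (Rabs (minor v v' * linform n zeta p))).
  { rewrite Rabs_mult. rewrite <- (Rmult_1_l (Rabs (linform n zeta p))) at 1.
    apply Rmult_le_compat_r; auto using Rabs_pos. }
  rewrite <- Key. eapply Rle_trans; [apply Rabs_sub_le|]. rewrite !(Rabs_mult (_ * minor p q)).
  assert (Rabs (b' * minor p q) * Rabs (linform n zeta v) <=
          2 * height n p * height n v' * Rabs (linform n zeta v)) by (apply Rmult_le_compat_r; auto using Rabs_pos).
  assert (Rabs (b * minor p q) * Rabs (linform n zeta v') <=
          2 * height n p * height n v * Rabs (linform n zeta v')) by (apply Rmult_le_compat_r; auto using Rabs_pos).
  lra.
Qed.

Lemma linform_chain_often_indep_triples s : (2 <= n)%nat -> Q_lin_indep_1 n zeta ->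
  best_chain n (height n) (fun v => Rabs (linform n zeta v)) s -> often_indep_blocks n 3 s.
Proof.
  intros Hn HQ Hs K. apply NNPP. intros Hno.
  assert (H3 : forall k, (K <= k)%nat -> ~ lin_indep n 3 (fun m => s (k + m)%nat))
    by (intros k Hk Hl; apply Hno; eauto).
  assert (H2 := chain_pair_indep n _ _ s Hs abs_homogeneous_height abs_homogeneous_linform).
  assert (Hsp := tail_in_plane n s K H2 H3).
  assert (E0 : forall k, s (k + 0)%nat = s k) by (intros; f_equal; lia).
  assert (E1 : forall k, s (k + 1)%nat = s (S k)) by (intros; f_equal; lia).
  set (p := s K).
  assert (HLp : 0 < Rabs (linform n zeta p)) by (apply Rabs_pos_lt, linform_neq0, (chain_nonzero _ _ _ _ Hs); auto).
  assert (Hp1 : 1 <= height n p) by apply (chain_ht_ge1 _ _ _ _ Hs).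
  destruct (linform_chain_er_ht_small s Hn Hs (Rabs (linform n zeta p) / (4 * height n p))
              ltac:(apply Rdiv_lt_0_compat; lra) K) as [k [Hk Hsm]].
  destruct (Hsp k Hk) as [a [b Eab]]. destruct (Hsp (S k) ltac:(lia)) as [a' [b' Eab']].
  assert (Hb := plane_linform_bound (fun m => s (K + m)%nat) (fun m => s (k + m)%nat) a b a' b'
                  (H2 K) (H2 k)). cbv beta in Hb. rewrite !E0, !E1 in Hb. fold p in Hb.
  specialize (Hb Eab Eab').
  pose proof (chain_ht_le _ _ _ _ Hs k). pose proof (chain_er_lt _ _ _ _ Hs k).
  pose proof (Rabs_pos (linform n zeta (s (S k)))).
  assert (Hfin : Rabs (linform n zeta p) <=
                 4 * height n p * (Rabs (linform n zeta (s k)) * height n (s (S k)))).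
  { eapply Rle_trans; [apply Hb|]. simpl in *.
    assert (height n (s k) * Rabs (linform n zeta (s (S k))) <=
            height n (s (S k)) * Rabs (linform n zeta (s k))) by (apply Rmult_le_compat; try lra; apply height_ge0).
    nra. }
  apply (Rmult_lt_compat_l (4 * height n p)) in Hsm; [|lra].
  replace (4 * height n p * (Rabs (linform n zeta p) / (4 * height n p))) with (Rabs (linform n zeta p))
    in Hsm by (field; lra). lra.
Qed.

End LinearForm.

(** * Simultaneous best approximations *)

Definition round (r : R) : Z := up (r - / 2).

Lemma round_half r : Rabs (r - IZR (round r)) <= / 2.
Proof. unfold round. destruct (archimed (r - / 2)). apply Rabs_le. lra. Qed.

Lemma round_nearest r y : Rabs (r - IZR (round r)) <= Rabs (r - IZR y).
Proof.
  destruct (Z.eq_dec y (round r)) as [->|E]; [lra|].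
  assert (H := Rabs_IZR_ge1 (y - round r) ltac:(lia)). rewrite minus_IZR in H.
  assert (H2 := round_half r).
  replace (IZR y - IZR (round r)) with ((r - IZR (round r)) - (r - IZR y)) in H by ring.
  pose proof (Rabs_sub_le (r - IZR (round r)) (r - IZR y)). lra.
Qed.

Section Simultaneous.
Variables (n : nat) (zeta : nat -> R).

Definition x_height (v : zvec) : R := Rabs (IZR (v 0%nat)).

Definition nearest_vec (x : Z) : zvec :=
  fun i => match i with O => x | S j => round (zeta j * IZR x) end.

Definition is_nearest (v : zvec) : Prop :=
  forall i, (i < n)%nat -> forall y : Z,
    Rabs (zeta i * IZR (v 0%nat) - IZR (v (S i))) <= Rabs (zeta i * IZR (v 0%nat) - IZR y).

Lemma nearest_vec_nearest x : is_nearest (nearest_vec x).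
Proof. intros i Hi y. apply round_nearest. Qed.

Lemma simdist_nearest_le_half v : is_nearest v -> simdist n zeta v <= / 2.
Proof.
  intros H. apply simdist_lub; [lra|]. intros i Hi.
  eapply Rle_trans; [apply (H i Hi (round (zeta i * IZR (v 0%nat))))|apply round_half].
Qed.

Lemma simdist_nearest_vec_le u : simdist n zeta (nearest_vec (u 0%nat)) <= simdist n zeta u.
Proof.
  apply simdist_lub; [apply simdist_ge0|]. intros i Hi. unfold nearest_vec.
  eapply Rle_trans; [apply round_nearest|apply simdist_ub; auto].
Qed.

Lemma simdist_nearest_same_x u v : is_nearest u -> is_nearest v ->
  Z.abs (u 0%nat) = Z.abs (v 0%nat) -> simdist n zeta u <= simdist n zeta v.
Proof.
  intros Hu Hv E. apply simdist_lub; [apply simdist_ge0|]. intros i Hi.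
  destruct (Z.eq_dec (u 0%nat) (v 0%nat)) as [E1|E1].
  - rewrite E1. eapply Rle_trans; [rewrite <- E1; apply (Hu i Hi (v (S i)))|].
    rewrite E1. apply simdist_ub; auto.
  - assert (E2 : u 0%nat = (- v 0%nat)%Z) by lia.
    eapply Rle_trans; [apply (Hu i Hi (- v (S i))%Z)|]. rewrite E2, !opp_IZR.
    replace (zeta i * - IZR (v 0%nat) - - IZR (v (S i))) with (- (zeta i * IZR (v 0%nat) - IZR (v (S i))))
      by ring.
    rewrite Rabs_Ropp. apply simdist_ub; auto.
Qed.

Lemma simdist_ge1_of_x0 u : nonzero n u -> u 0%nat = 0%Z -> 1 <= simdist n zeta u.
Proof.
  intros [[|i] [Hi Hu]] H0; [contradiction|].
  eapply Rle_trans; [|apply (simdist_ub n zeta u i); lia]. rewrite H0.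
  replace (zeta i * IZR 0 - IZR (u (S i))) with (- IZR (u (S i))) by (simpl; ring).
  rewrite Rabs_Ropp. apply Rabs_IZR_ge1; auto.
Qed.

Lemma simdist_pos u : (1 <= n)%nat -> Q_lin_indep_1 n zeta -> u 0%nat <> 0%Z -> 0 < simdist n zeta u.
Proof.
  intros Hn HQ Hu. destruct (simdist_ge0 n zeta u) as [|E]; auto. exfalso.
  assert (H := simdist_ub n zeta u 0 ltac:(lia)). rewrite <- E in H.
  assert (H0 : zeta 0%nat * IZR (u 0%nat) - IZR (u 1%nat) = 0)
    by (apply NNPP; intros Hne; apply Rabs_pos_lt in Hne; lra).
  destruct (HQ (inject_Z (- u 1%nat)) (fun i => if Nat.eqb i 0 then inject_Z (u 0%nat) else 0%Q))
    as [_ H1].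
  { rewrite (rsum_delta _ n 0); [| lia |].
    - simpl. rewrite !Q2R_inject_Z, opp_IZR. lra.
    - intros i Hi Hi0. destruct (Nat.eqb_spec i 0); [lia|]. unfold Q2R; simpl; ring. }
  specialize (H1 0%nat ltac:(lia)). simpl in H1. rewrite Q2R_inject_Z in H1. apply Hu, eq_IZR; auto.
Qed.

Lemma abs_homogeneous_x_height : abs_homogeneous n x_height.
Proof. intros u v t H. unfold x_height. fold (coordR u 0) (coordR v 0). rewrite H by lia. apply Rabs_mult. Qed.

Lemma abs_homogeneous_simdist : abs_homogeneous n (simdist n zeta).
Proof. intros u v t H. apply simdist_scale; auto. Qed.

Lemma sign_x_height_simdist u v : same_up_to_sign n u v ->
  x_height u = x_height v /\ simdist n zeta u = simdist n zeta v.
Proof.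
  intros H. destruct (sign_coordR n u v H) as [t [Ht E]].
  rewrite (abs_homogeneous_x_height u v t), (abs_homogeneous_simdist u v t), Ht by auto. split; ring.
Qed.

Lemma x_height_lt_nat u v : x_height u < x_height v <-> (Z.abs_nat (u 0%nat) < Z.abs_nat (v 0%nat))%nat.
Proof.
  unfold x_height. rewrite !Rabs_Zabs. split; intros H.
  - apply lt_IZR in H. lia.
  - apply IZR_lt. lia.
Qed.

(* Take a vector of least [|x|] and replace it by its nearest vector. *)
Lemma ex_sim_best_below (P : nat -> Prop) d : d <= / 2 ->
  (forall a b, (a <= b)%nat -> P b -> P a) ->
  (exists u, nonzero n u /\ simdist n zeta u < d /\ P (Z.abs_nat (u 0%nat))) ->
  exists w, sim_best_approx n zeta w /\ simdist n zeta w < d /\ P (Z.abs_nat (w 0%nat)) /\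
    forall u, nonzero n u -> x_height u < x_height w -> d <= simdist n zeta u.
Proof.
  intros Hd HP Hex.
  destruct (ex_minimizer (fun w => Z.abs_nat (w 0%nat))
              (fun w => nonzero n w /\ simdist n zeta w < d /\ P (Z.abs_nat (w 0%nat))) Hex)
    as [w [[Hw1 [Hw2 Hw3]] Hmin]].
  assert (Hw0 : w 0%nat <> 0%Z) by (intro E; pose proof (simdist_ge1_of_x0 w Hw1 E); lra).
  set (w' := nearest_vec (w 0%nat)).
  assert (Hle : simdist n zeta w' <= simdist n zeta w) by apply simdist_nearest_vec_le.
  assert (Hlast : forall u, nonzero n u -> x_height u < x_height w' -> d <= simdist n zeta u).
  { intros u Hu Hlt. apply x_height_lt_nat in Hlt. apply Rnot_lt_le. intros Hno.
    assert (Hm := Hmin u ltac:(repeat split; auto; apply (HP _ (Z.abs_nat (w 0%nat))); auto; simpl in Hlt; lia)).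
    simpl in Hlt. lia. }
  exists w'. split; [split; [|split]|split; [|split]]; auto; try lra.
  - apply nearest_vec_nearest.
  - intros u Hu Hlt. pose proof (Hlast u Hu Hlt). lra.
Qed.

Lemma sim_chain_of (s : nat -> zvec) : (1 <= n)%nat -> Q_lin_indep_1 n zeta ->
  (forall k, sim_best_approx n zeta (s k)) ->
  (forall k, x_height (s k) <= x_height (s (S k))) ->
  (forall k, simdist n zeta (s (S k)) < simdist n zeta (s k)) ->
  (forall k u, nonzero n u -> x_height u < x_height (s (S k)) -> simdist n zeta (s k) <= simdist n zeta u) ->
  best_chain n x_height (simdist n zeta) s.
Proof.
  intros Hn HQ Hb Hm Hs Hbb.
  (* nearest vectors with the same [|x|] have the same error, so [|x|] increases strictly *)
  assert (Hstr : forall k, x_height (s k) + 1 <= x_height (s (S k))).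
  { intros k. destruct (Hm k) as [H|E]; unfold x_height in *; rewrite !Rabs_Zabs in *;
      rewrite <- plus_IZR; apply IZR_le; [apply lt_IZR in H; lia|]. exfalso. apply eq_IZR in E.
    pose proof (simdist_nearest_same_x (s k) (s (S k)) (proj1 (proj2 (Hb k))) (proj1 (proj2 (Hb (S k))))
                  ltac:(lia)).
    specialize (Hs k). lra. }
  assert (Hge : forall k, INR k <= x_height (s k)).
  { induction k; [apply Rabs_pos|]. rewrite S_INR. specialize (Hstr k). lra. }
  constructor; auto.
  - intros B. destruct (INR_archimed 1 B) as [N HN]; [lra|]. exists N. specialize (Hge N). lra.
  - intros k. apply simdist_pos; auto. apply (Hb k).
  - intros k. apply Rabs_IZR_ge1, (Hb k).
  - intros k. exists 0%nat. split; [lia|apply (Hb k)].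
Qed.

Lemma sim_best_approx_seq_chain bu : (1 <= n)%nat -> Q_lin_indep_1 n zeta ->
  sim_best_approx_seq n zeta bu -> best_chain n x_height (simdist n zeta) bu.
Proof.
  intros Hn HQ [Hb [Henum Hmon]].
  assert (Hxm : forall k, x_height (bu k) <= x_height (bu (S k))) by apply Hmon.
  assert (Hsd : forall k, simdist n zeta (bu (S k)) < simdist n zeta (bu k)) by apply Hmon.
  apply sim_chain_of; auto.
  intros k u Hu Hlt. apply Rnot_lt_le. intros Hno.
  destruct (ex_sim_best_below (fun m => (m < Z.abs_nat (bu (S k) 0%nat))%nat) (simdist n zeta (bu k)))
    as [w [Hw1 [Hw2 [Hw3 _]]]].
  - apply simdist_nearest_le_half; exact (proj1 (proj2 (Hb k))).
  - intros; lia.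
  - exists u. repeat split; auto. apply x_height_lt_nat; auto.
  - destruct (Henum w Hw1) as [j Hj]. destruct (sign_x_height_simdist w (bu j) Hj) as [E1 E2].
    apply x_height_lt_nat in Hw3. rewrite E1 in Hw3.
    destruct (Compare_dec.le_lt_dec j k) as [Hjk|Hjk].
    + pose proof (decreasing_seq_le (fun k => simdist n zeta (bu k)) Hsd j k Hjk). simpl in *. lra.
    + pose proof (increasing_seq_le (fun k => x_height (bu k)) Hxm (S k) j Hjk). simpl in *. lra.
Qed.

Definition arbitrarily_good : Prop :=
  forall eps, 0 < eps -> exists u, nonzero n u /\ simdist n zeta u < eps.

Lemma ex_sim_best_chain : (1 <= n)%nat -> Q_lin_indep_1 n zeta -> arbitrarily_good ->
  exists s, best_chain n x_height (simdist n zeta) s.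
Proof.
  intros Hn HQ Hgood.
  assert (H1 : sim_best_approx n zeta (nearest_vec 1)).
  { split; [discriminate|split; [apply nearest_vec_nearest|]].
    intros u Hu Hlt. simpl in Hlt. rewrite Rabs_R1 in Hlt.
    assert (u 0%nat = 0%Z).
    { destruct (Z.eq_dec (u 0%nat) 0) as [|Hne]; auto. pose proof (Rabs_IZR_ge1 _ Hne). lra. }
    pose proof (simdist_ge1_of_x0 u Hu H).
    pose proof (simdist_nearest_le_half _ (nearest_vec_nearest 1)). lra. }
  assert (Hstep : forall v, sim_best_approx n zeta v -> exists w, sim_best_approx n zeta w /\
            (simdist n zeta w < simdist n zeta v /\ x_height v <= x_height w /\
             forall u, nonzero n u -> x_height u < x_height w -> simdist n zeta v <= simdist n zeta u)).
  { intros v Hv.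
    destruct (Hgood (simdist n zeta v)) as [u [Hu Hul]]; [apply simdist_pos; auto; apply Hv|].
    destruct (ex_sim_best_below (fun _ => True) (simdist n zeta v)) as [w [Hw1 [Hw2 [_ Hw4]]]];
      [apply simdist_nearest_le_half; exact (proj1 (proj2 Hv))|auto|eauto|].
    exists w. split; [auto|split; [auto|split; [|auto]]].
    apply Rnot_lt_le. intros Hlt. destruct Hv as [_ [_ Hv3]].
    assert (Hwn : nonzero n w) by (exists 0%nat; split; [lia|apply Hw1]).
    pose proof (Hv3 w Hwn Hlt). lra. }
  destruct (ex_iterate _ _ _ H1 Hstep) as [s [_ Hs]].
  exists s. apply sim_chain_of; auto; intros k; apply (Hs k).
Qed.

Lemma sim_unif_exp0 : unif_approx_set n x_height (simdist n zeta) 1 0.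
Proof.
  apply (unif_approx_set_zero _ _ _ (nearest_vec 1)).
  - exists 0%nat. split; [lia|discriminate].
  - unfold x_height. simpl. rewrite Rabs_R1. lra.
  - pose proof (simdist_nearest_le_half _ (nearest_vec_nearest 1)). lra.
Qed.

Lemma arbitrarily_good_of_unif_lub lh : is_lub (unif_approx_set n x_height (simdist n zeta) 1) lh ->
  0 < lh -> arbitrarily_good.
Proof.
  intros Hl Hp eps He.
  destruct (unif_approx_set_of_lt _ _ _ _ _ (lh / 2) Hl ltac:(lra)) as [X0 [HX0 Hh]].
  set (X := Rmax X0 (exp (2 * Rabs (ln eps) / lh + 1))).
  destruct (Hh X (Rmax_l _ _)) as [V [HV HVb]]. destruct (HVb 0%nat ltac:(lia)) as [_ Hd].
  exists (V 0%nat). split; [apply lin_indep_nonzero; auto|].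
  eapply Rle_lt_trans; [apply Hd|]. unfold Rpower. rewrite <- (exp_ln eps) by auto. apply exp_increasing.
  assert (HlnX : 2 * Rabs (ln eps) / lh + 1 <= ln X).
  { rewrite <- (ln_exp (2 * Rabs (ln eps) / lh + 1)) at 1. apply ln_le; [apply exp_pos|apply Rmax_r]. }
  apply (Rmult_le_compat_l (lh / 2)) in HlnX; [|lra].
  replace (lh / 2 * (2 * Rabs (ln eps) / lh + 1)) with (Rabs (ln eps) + lh / 2) in HlnX by (field; lra).
  pose proof (Rle_abs (- ln eps)). rewrite Rabs_Ropp in H. lra.
Qed.

Lemma sim_chain_simdist_small s : arbitrarily_good -> best_chain n x_height (simdist n zeta) s ->
  forall eps, 0 < eps -> forall K, exists k, (K <= k)%nat /\ simdist n zeta (s k) < eps.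
Proof.
  intros Hgood Hs eps He K. destruct (Hgood eps He) as [u [Hu Hul]].
  destruct (chain_ht_eventually_gt _ _ _ _ Hs (x_height u) K) as [k [Hk HH]].
  exists k. split; auto.
  pose proof (chain_minimal _ _ _ _ Hs k u Hu (HH (S k) ltac:(lia))). lra.
Qed.

End Simultaneous.

Section SimultaneousTriples.
Variables (n : nat) (zeta : nat -> R).

Definition x_minor (p q : zvec) (l : nat) : Z := (p 0%nat * q l - q 0%nat * p l)%Z.

(* It vanishes when the plane spanned by [p] and [q] contains the direction [(1, zeta)], which is
   forced if the plane contains arbitrarily good simultaneous approximations. *)
Definition plane_relation (p q : zvec) (i j : nat) : R :=
  IZR (x_minor p q (S j)) * (IZR (p 0%nat) * zeta i - IZR (p (S i))) -
  IZR (x_minor p q (S i)) * (IZR (p 0%nat) * zeta j - IZR (p (S j))).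

Lemma plane_relation_bound p q v a b i j : (i < n)%nat -> (j < n)%nat ->
  (forall l, (l <= n)%nat -> coordR v l = a * coordR p l + b * coordR q l) ->
  Rabs (plane_relation p q i j) * Rabs (coordR v 0) <=
  Rabs (IZR (p 0%nat)) * (Rabs (IZR (x_minor p q (S j))) + Rabs (IZR (x_minor p q (S i)))) *
    simdist n zeta v.
Proof.
  intros Hi Hj Eab.
  set (mi := IZR (x_minor p q (S i))). set (mj := IZR (x_minor p q (S j))).
  assert (Hpv : forall l, (l <= n)%nat ->
            IZR (p 0%nat) * coordR v l - IZR (p l) * coordR v 0 = b * IZR (x_minor p q l)).
  { intros l Hl. unfold x_minor. rewrite minus_IZR, !mult_IZR. rewrite (Eab l), (Eab 0%nat) by lia.
    unfold coordR. ring. }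
  assert (Ei := Hpv (S i) ltac:(lia)). assert (Ej := Hpv (S j) ltac:(lia)). fold mi in Ei. fold mj in Ej.
  set (ei := zeta i * coordR v 0 - coordR v (S i)). set (ej := zeta j * coordR v 0 - coordR v (S j)).
  assert (Id : plane_relation p q i j * coordR v 0 = IZR (p 0%nat) * (mj * ei - mi * ej)).
  { transitivity (IZR (p 0%nat) * (mj * ei - mi * ej) +
      (mj * (IZR (p 0%nat) * coordR v (S i) - IZR (p (S i)) * coordR v 0) -
       mi * (IZR (p 0%nat) * coordR v (S j) - IZR (p (S j)) * coordR v 0))).
    - unfold plane_relation, ei, ej. fold mi mj. ring.
    - rewrite Ei, Ej. ring. }
  rewrite <- Rabs_mult, Id, Rabs_mult, Rmult_assoc. apply Rmult_le_compat_l; [apply Rabs_pos|].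
  assert (Hei : Rabs ei <= simdist n zeta v) by (apply simdist_ub; auto).
  assert (Hej : Rabs ej <= simdist n zeta v) by (apply simdist_ub; auto).
  eapply Rle_trans; [apply Rabs_sub_le|]. rewrite !Rabs_mult.
  pose proof (Rabs_pos mi). pose proof (Rabs_pos mj).
  assert (Rabs mj * Rabs ei <= Rabs mj * simdist n zeta v) by (apply Rmult_le_compat_l; auto).
  assert (Rabs mi * Rabs ej <= Rabs mi * simdist n zeta v) by (apply Rmult_le_compat_l; auto).
  lra.
Qed.

Lemma plane_relation_minor_eq0 p q i j : Q_lin_indep_1 n zeta ->
  (i < n)%nat -> (j < n)%nat -> i <> j -> plane_relation p q i j = 0 ->
  (x_minor p q (S j) * p 0%nat)%Z = 0%Z.
Proof.
  intros HQ Hi Hj Hij HE.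
  set (mi := x_minor p q (S i)) in *. set (mj := x_minor p q (S j)) in *.
  destruct (HQ (inject_Z (- mj * p (S i) + mi * p (S j)))
                 (fun t => if Nat.eqb t i then inject_Z (mj * p 0%nat) else
                           if Nat.eqb t j then inject_Z (- mi * p 0%nat) else 0%Q)) as [_ HQ2].
  { rewrite (rsum_delta2 _ n i j); auto.
    - rewrite Nat.eqb_refl. destruct (Nat.eqb_spec j i); [lia|]. rewrite Nat.eqb_refl, !Q2R_inject_Z.
      unfold plane_relation in HE. fold mi mj in HE. rewrite !plus_IZR, !mult_IZR, !opp_IZR. lra.
    - intros t Ht Hti Htj. destruct (Nat.eqb_spec t i); [lia|]. destruct (Nat.eqb_spec t j); [lia|].
      unfold Q2R; simpl; ring. }
  specialize (HQ2 i Hi). rewrite Nat.eqb_refl, Q2R_inject_Z in HQ2. apply eq_IZR, HQ2.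
Qed.

Lemma sim_chain_often_indep_triples s : (2 <= n)%nat -> Q_lin_indep_1 n zeta ->
  arbitrarily_good n zeta -> best_chain n x_height (simdist n zeta) s -> often_indep_blocks n 3 s.
Proof.
  intros Hn HQ Hgood Hs K. apply NNPP. intros Hno.
  assert (H3 : forall k, (K <= k)%nat -> ~ lin_indep n 3 (fun m => s (k + m)%nat))
    by (intros k Hk Hl; apply Hno; eauto).
  assert (H2 := chain_pair_indep n _ _ s Hs (abs_homogeneous_x_height n) (abs_homogeneous_simdist n zeta)).
  assert (Hsp := tail_in_plane n s K H2 H3).
  set (p := s K) in *. set (q := s (S K)) in *.
  assert (Hp0 : p 0%nat <> 0%Z).
  { intros E. pose proof (chain_ht_ge1 _ _ _ _ Hs K) as H. unfold x_height in H. fold p in H.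
    rewrite E, Rabs_R0 in H. lra. }
  assert (HE : forall i j, (i < n)%nat -> (j < n)%nat -> plane_relation p q i j = 0).
  { intros i j Hi Hj. apply NNPP. intros HnE. apply Rabs_pos_lt in HnE.
    set (C := Rabs (IZR (p 0%nat)) * (Rabs (IZR (x_minor p q (S j))) + Rabs (IZR (x_minor p q (S i))))).
    assert (HC : 0 <= C) by (unfold C; pose proof (Rabs_pos (IZR (p 0%nat)));
      pose proof (Rabs_pos (IZR (x_minor p q (S j)))); pose proof (Rabs_pos (IZR (x_minor p q (S i)))); nra).
    destruct (sim_chain_simdist_small n zeta s Hgood Hs (Rabs (plane_relation p q i j) / (C + 1))
                ltac:(apply Rdiv_lt_0_compat; lra) K) as [k [Hk Hsk]].
    destruct (Hsp k Hk) as [a [b Eab]].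
    assert (Hb := plane_relation_bound p q (s k) a b i j Hi Hj Eab). fold C in Hb.
    assert (Hv1 : 1 <= Rabs (coordR (s k) 0)) by apply (chain_ht_ge1 _ _ _ _ Hs k).
    apply (Rmult_lt_compat_l (C + 1)) in Hsk; [|lra].
    replace ((C + 1) * (Rabs (plane_relation p q i j) / (C + 1))) with (Rabs (plane_relation p q i j))
      in Hsk by (field; lra).
    assert (Rabs (plane_relation p q i j) <= Rabs (plane_relation p q i j) * Rabs (coordR (s k) 0))
      by (rewrite <- (Rmult_1_r (Rabs (plane_relation p q i j))) at 1; apply Rmult_le_compat_l; lra).
    pose proof (simdist_ge0 n zeta (s k)). lra. }
  assert (Hm : forall j, (j < n)%nat -> x_minor p q (S j) = 0%Z).
  { intros j Hj. set (i := if Nat.eqb j 0 then 1%nat else 0%nat).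
    assert (Hi : (i < n)%nat) by (unfold i; destruct (Nat.eqb_spec j 0); lia).
    assert (Hij : i <> j) by (unfold i; destruct (Nat.eqb_spec j 0); lia).
    pose proof (plane_relation_minor_eq0 p q i j HQ Hi Hj Hij (HE i j Hi Hj)). nia. }
  destruct (lin_indep2_coeffs n _ (IZR (q 0%nat)) (- IZR (p 0%nat)) (H2 K)) as [_ E].
  - intros [|l] Hl; rewrite Nat.add_0_r, Nat.add_1_r; fold p q; unfold coordR; [ring|].
    assert (Hml := Hm l ltac:(lia)). unfold x_minor in Hml.
    apply (f_equal IZR) in Hml. rewrite minus_IZR, !mult_IZR in Hml. lra.
  - apply Hp0, eq_IZR. simpl. lra.
Qed.

Definition floor_vec (a : nat) : zvec :=
  fun i => match i with O => 1%Z | S j => (Int_part (zeta j) + if Nat.eqb (S j) a then 1 else 0)%Z end.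

Lemma simdist_floor_vec_le1 a : simdist n zeta (floor_vec a) <= 1.
Proof.
  apply simdist_lub; [lra|]. intros i Hi. unfold floor_vec. destruct (base_Int_part (zeta i)).
  destruct (Nat.eqb (S i) a); rewrite plus_IZR; apply Rabs_le; simpl IZR; lra.
Qed.

Lemma sim_exps3_zero : (2 <= n)%nat -> approx_set n x_height (simdist n zeta) 3 0.
Proof.
  intros Hn X0. exists (Rmax X0 1). split; [apply Rmax_l|]. split; [apply Rmax_r|].
  exists floor_vec. split.
  - intros c Hc k Hk.
    assert (C0 := Hc 0%nat ltac:(lia)). assert (C1 := Hc 1%nat ltac:(lia)). assert (C2 := Hc 2%nat ltac:(lia)).
    rewrite rsum_3 in C0, C1, C2. simpl in C0, C1, C2. rewrite !plus_IZR in C1, C2. simpl in C1, C2.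
    assert (c 1%nat = 0) by nra. assert (c 2%nat = 0) by nra.
    destruct k as [|[|[|k]]]; lra || lia.
  - intros k Hk. split.
    + unfold x_height. simpl. rewrite Rabs_R1. apply Rmax_r.
    + rewrite Ropp_0, Rpower_O by (pose proof (Rmax_r X0 1); lra). apply simdist_floor_vec_le1.
Qed.

End SimultaneousTriples.

(** * Determinants of consecutive best approximations *)

Module DeterminantBounds.
Import all_boot all_order all_algebra fingroup perm Rstruct.
Import Order.TTheory GRing.Theory Num.Theory.
Local Open Scope ring_scope.

(* Each term of the Leibniz expansion meets column [0] in some row [j0] and, in another row
   [i1], a column other than [0]; all remaining factors are bounded by [G]. *)
Section LeibnizBound.
Variables (m : nat) (A : 'M[R]_(m.+2)) (e g : 'I_(m.+2) -> R) (E1 G : R).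
Hypothesis g_ge0 : forall j, 0 <= g j.
Hypotheses (col0_le : forall j, `|A j ord0| <= e j) (col_le : forall j i, i != ord0 -> `|A j i| <= g j).
Hypothesis pair_le : forall j0, exists2 i1, i1 != j0 & e j0 * g i1 <= E1.
Hypothesis g_le : forall i, g i <= G.

Lemma norm_det_term_le (s : 'S_(m.+2)) : `|(-1) ^+ s * \prod_i A i (s i)| <= E1 * G ^+ m.
Proof.
  have G0 : 0 <= G by apply: le_trans (g_ge0 ord0) (g_le ord0).
  rewrite normrM normr_sign mul1r normr_prod.
  set j0 := (s^-1)%g ord0.
  have sj0 : s j0 = ord0 by rewrite /j0 permKV.
  rewrite (bigD1 j0) //= sj0.
  case: (pair_le j0) => i1 Hi1 He1.
  rewrite (bigD1 i1) //=.
  have si1 : s i1 != ord0 by rewrite -sj0 (inj_eq perm_inj).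
  have B1 : `|A i1 (s i1)| <= g i1 := col_le _ _ si1.
  have card_rest : #|[pred i | (i != j0) && (i != i1)]| = m.
  { have Hc := cardC1 j0. rewrite card_ord /= (cardD1 i1) inE Hi1 add1n in Hc.
    have Hc' : #|[predD1 (predC1 j0) & i1]| = m by case: Hc.
    rewrite -[in RHS]Hc'. apply: eq_card => i. by rewrite !inE andbC. }
  have B2 : \prod_(i | (i != j0) && (i != i1)) `|A i (s i)| <= G ^+ m.
  { apply: le_trans (_ : \prod_(i | (i != j0) && (i != i1)) G <= _).
    - apply: ler_prod => i /andP [Hi0 Hi1']. rewrite normr_ge0 /=. apply: le_trans (g_le i).
      apply: col_le. by rewrite -sj0 (inj_eq perm_inj).
    - by rewrite prodr_const card_rest. }
  have P0 : 0 <= \prod_(i | (i != j0) && (i != i1)) `|A i (s i)|.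
  { by apply: prodr_ge0 => i _; apply: normr_ge0. }
  apply: le_trans (_ : e j0 * (g i1 * G ^+ m) <= _).
  - apply: ler_pM => //; [exact: mulr_ge0|exact: ler_pM].
  - rewrite mulrA. apply: ler_wpM2r => //. exact: exprn_ge0.
Qed.

Lemma norm_det_le : `|\det A| <= (m.+2)`!%:R * (E1 * G ^+ m).
Proof.
  rewrite /determinant. apply: le_trans (ler_norm_sum _ _ _) _.
  apply: le_trans (_ : \sum_(s : 'S_(m.+2)) (E1 * G ^+ m) <= _).
  - by apply: ler_sum => s _; apply: norm_det_term_le.
  - by rewrite sumr_const card_Sn mulr_natl.
Qed.

End LeibnizBound.

Lemma big_sum_rsum (F : nat -> R) k : \sum_(i < k) F i = rsum F k.
Proof. elim: k => [|k IH]; first by rewrite big_ord0. by rewrite big_ord_recr /= IH. Qed.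

Lemma IZR_int z : IZR z \is a Num.int.
Proof.
  case: z => [|p|p]; first by rewrite R0E.
  - by rewrite IZRposE INRE natr_int.
  - by rewrite -Pos2Z.opp_pos opp_IZR rpredN IZRposE INRE natr_int.
Qed.

Lemma det_int k (M : 'M[R]_k) : (forall i j, M i j \is a Num.int) -> \det M \is a Num.int.
Proof.
  move=> H. apply: rpred_sum => s _. apply: rpredM; first by rewrite rpredX // rpredN rpred1.
  by apply: rpred_prod => i _; exact: H.
Qed.

Lemma lin_indep_det_ge1 n (V : nat -> zvec) : lin_indep n (S n) V ->
  1 <= `|\det (\matrix_(j < n.+1, i < n.+1) IZR (V j i))|.
Proof.
  move=> HV. apply: norm_intr_ge1; first by apply: det_int => i j; rewrite mxE; exact: IZR_int.
  apply/negP => /det0P [v Hv0 Hv]. move/negP: Hv0; apply. apply/eqP/rowP => j.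
  have Hz : forall k, (k < S n)%coq_nat -> v ord0 (inord k) = 0.
  { apply: (HV (fun k => v ord0 (inord k))) => i Hi. rewrite -big_sum_rsum.
    move/matrixP: (Hv) => /(_ ord0 (inord i)). rewrite !mxE => H0.
    apply: (etrans _ H0). apply: eq_bigr => k _. rewrite mxE inordK; last by apply/ssrnat.ltP; lia.
    by rewrite inord_val. }
  rewrite mxE -(inord_val j). apply: Hz. apply/ssrnat.ltP. by rewrite ltn_ord.
Qed.

Lemma lin_indep_det_mul_ge1 n (V : nat -> zvec) (P : 'M[R]_(n.+1)) : lin_indep n (S n) V ->
  `|\det P| = 1 -> 1 <= `|\det ((\matrix_(j < n.+1, i < n.+1) IZR (V j i)) *m P)|.
Proof. move=> HV HP. rewrite det_mulmx normrM HP mulr1. exact: lin_indep_det_ge1. Qed.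

Definition vec_matrix m (V : nat -> zvec) : 'M[R]_(m.+2) := \matrix_(j, i) IZR (V j i).

Definition linform_mx m (zeta : nat -> R) : 'M[R]_(m.+2) :=
  \matrix_(l, i) (if i == ord0 then (if l == ord0 then 1 else zeta (l.-1)) else (l == i)%:R).

Lemma linform_mx_col0 m zeta V j :
  (vec_matrix m V *m linform_mx m zeta) j ord0 = linform (S m) zeta (V j).
Proof.
  rewrite !mxE big_ord_recl !mxE eqxx /= mulr1 /linform -big_sum_rsum.
  congr (_ + _). apply: eq_bigr => l _. by rewrite !mxE /= mulrC.
Qed.

Lemma linform_mx_col m zeta V j i : i != ord0 ->
  (vec_matrix m V *m linform_mx m zeta) j i = IZR (V j i).
Proof.
  move=> Hi. rewrite !mxE (bigD1 i) //= !mxE (negbTE Hi) eqxx mulr1 big1 ?addr0 // => l Hl.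
  by rewrite !mxE (negbTE Hi) (negbTE Hl) mulr0.
Qed.

Lemma norm_det_linform_mx m zeta : `|\det (linform_mx m zeta)| = 1.
Proof.
  rewrite det_trig.
  - rewrite normr_prod. apply: big1 => i _. rewrite mxE eqxx. by case: (i == ord0); rewrite normr1.
  - apply/forallP => l; apply/forallP => i; apply/implyP => Hli. rewrite mxE.
    have Hi0 : i != ord0 by apply/eqP => Hi; rewrite Hi in Hli.
    have Hli' : l != i by rewrite neq_ltn Hli.
    by rewrite (negbTE Hi0) (negbTE Hli').
Qed.

Definition simdist_mx m (zeta : nat -> R) : 'M[R]_(m.+2) :=
  \matrix_(l, i) (if l == ord0 then (if i == ord0 then 1 else zeta (i.-1)) else - (l == i)%:R).

Lemma simdist_mx_entry m zeta V (j i : 'I_(m.+2)) :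
  (vec_matrix m V *m simdist_mx m zeta) j i =
  (if i == ord0 then IZR (V j 0%N) else IZR (V j 0%N) * zeta (i.-1) - IZR (V j i)).
Proof.
  rewrite !mxE (bigD1 ord0) //= !mxE eqxx.
  case: (eqVneq i ord0) => [->|Hi].
  - rewrite mulr1 big1 ?addr0 // => l Hl. by rewrite !mxE (negbTE Hl) /= oppr0 mulr0.
  - rewrite (bigD1 i) /=; last by rewrite Hi.
    rewrite !mxE (negbTE Hi) eqxx big1 ?addr0; first by rewrite mulrN mulr1.
    move=> l /andP [Hl Hli]. by rewrite !mxE (negbTE Hl) (negbTE Hli) /= oppr0 mulr0.
Qed.

Lemma norm_det_simdist_mx m zeta : `|\det (simdist_mx m zeta)| = 1.
Proof.
  rewrite -det_tr det_trig.
  - rewrite normr_prod. apply: big1 => i _. rewrite !mxE eqxx.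
    by case: (i == ord0); rewrite ?normrN normr1.
  - apply/forallP => l; apply/forallP => i; apply/implyP => Hli. rewrite !mxE.
    have Hi0 : i != ord0 by apply/eqP => Hi; rewrite Hi in Hli.
    have Hli' : i != l by rewrite eq_sym neq_ltn Hli.
    by rewrite (negbTE Hi0) (negbTE Hli') oppr0.
Qed.

Delimit Scope R_scope with Re.

Lemma linform_det_bound m zeta (V : nat -> zvec) :
  lin_indep (S m) (S (S m)) V ->
  (forall j j', (j <= j')%coq_nat -> (height (S m) (V j) <= height (S m) (V j'))%Re) ->
  (forall j j', (j <= j')%coq_nat ->
     (Rabs (linform (S m) zeta (V j')) <= Rabs (linform (S m) zeta (V j)))%Re) ->
  (1 <= INR (Factorial.fact (S (S m))) * Rabs (linform (S m) zeta (V 0%N)) *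
          height (S m) (V 1%N) * height (S m) (V (S m)) ^ m)%Re.
Proof.
  move=> HV Hh HL.
  have Hb := norm_det_le _ (vec_matrix m V *m linform_mx m zeta)
     (fun j => Rabs (linform (S m) zeta (V j))) (fun j => height (S m) (V j))
     (Rabs (linform (S m) zeta (V 0%N)) * height (S m) (V 1%N)) (height (S m) (V (S m))).
  have Hle := le_trans (lin_indep_det_mul_ge1 _ _ _ HV (norm_det_linform_mx m zeta)) (Hb _ _ _ _ _).
  apply/RleP. rewrite !RmultE INRE factE RpowE -!mulrA R1E. move: Hle. rewrite !RmultE -!mulrA. apply.
  - move=> j. apply/RleP. exact: height_ge0.
  - move=> j. by rewrite linform_mx_col0 -RabsE.
  - move=> j i Hi. rewrite linform_mx_col // -RabsE. apply/RleP. apply: height_ub.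
    apply/ssrnat.leP. by rewrite -ltnS.
  - move=> j0. case: (eqVneq j0 ord0) => [->|Hj0].
    + have H1 : (inord 1 : 'I_(m.+2)) != ord0 by apply/eqP => /(congr1 val); rewrite /= inordK.
      exists (inord 1) => //=. by rewrite inordK.
    + exists ord0; first by rewrite eq_sym.
      apply: ler_pM; try (apply/RleP; first [exact: Rabs_pos|exact: height_ge0]).
      * apply/RleP. apply: HL. by apply/ssrnat.leP.
      * apply/RleP. apply: Hh. by apply/ssrnat.leP.
  - move=> i. apply/RleP. apply: Hh. apply/ssrnat.leP. by rewrite -ltnS.
Qed.

Lemma simdist_det_bound m zeta (V : nat -> zvec) :
  lin_indep (S m) (S (S m)) V ->
  (forall j j', (j <= j')%coq_nat -> (Rabs (IZR (V j 0%N)) <= Rabs (IZR (V j' 0%N)))%Re) ->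
  (forall j j', (j <= j')%coq_nat -> (simdist (S m) zeta (V j') <= simdist (S m) zeta (V j))%Re) ->
  (1 <= INR (Factorial.fact (S (S m))) * Rabs (IZR (V (S m) 0%N)) *
          simdist (S m) zeta (V m) * simdist (S m) zeta (V 0%N) ^ m)%Re.
Proof.
  move=> HV Hh HL.
  have Hb := norm_det_le _ (vec_matrix m V *m simdist_mx m zeta)
     (fun j => Rabs (IZR (V j 0%N))) (fun j => simdist (S m) zeta (V j))
     (Rabs (IZR (V (S m) 0%N)) * simdist (S m) zeta (V m)) (simdist (S m) zeta (V 0%N)).
  have Hle := le_trans (lin_indep_det_mul_ge1 _ _ _ HV (norm_det_simdist_mx m zeta)) (Hb _ _ _ _ _).
  apply/RleP. rewrite !RmultE INRE factE RpowE -!mulrA R1E. move: Hle. rewrite !RmultE -!mulrA. apply.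
  - move=> j. apply/RleP. exact: simdist_ge0.
  - move=> j. by rewrite simdist_mx_entry eqxx -RabsE.
  - move=> j i Hi. rewrite simdist_mx_entry (negbTE Hi) -RabsE. apply/RleP.
    have Hipos : (0 < i)%N by rewrite lt0n; apply/eqP => H0; move/eqP: Hi; apply; apply: val_inj.
    have Hi1 : (i.-1 < S m)%coq_nat by apply/ssrnat.ltP; rewrite -ltnS prednK.
    have := simdist_ub (S m) zeta (V j) (i.-1) Hi1.
    by rewrite prednK // mulrC.
  - move=> j0. case: (eqVneq j0 ord_max) => [->|Hj0].
    + have H1 : (inord m : 'I_(m.+2)) != ord_max.
      { apply/eqP => /(congr1 val). rewrite /= inordK //. lia. }
      exists (inord m) => //=. by rewrite inordK.
    + exists ord_max; first by rewrite eq_sym.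
      apply: ler_pM; try (apply/RleP; first [exact: Rabs_pos|exact: simdist_ge0]).
      * apply/RleP. apply: Hh. apply/ssrnat.leP. by rewrite -ltnS.
      * apply/RleP. apply: HL. by apply/ssrnat.leP.
  - move=> i. apply/RleP. apply: HL. by apply/ssrnat.leP.
Qed.

End DeterminantBounds.

Lemma w_bound_of_poly n w wh : (2 <= n)%nat -> 0 <= wh -> wh <= w ->
  wh ^ n <= wh ^ (n - 1) + INR (n - 1) * w ^ (n - 1) ->
  wh * Rpower ((wh - 1) / INR (n - 1)) (/ INR (n - 1)) <= w.
Proof.
  intros Hn H0 Hw H.
  assert (Hn1 : 1 <= INR (n - 1)) by (apply (le_INR 1); lia).
  destruct (Rle_dec wh 1) as [H1|H1].
  - (* [Rpower] of a nonpositive base is [exp 0 = 1] *)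
    assert (Rpower ((wh - 1) / INR (n - 1)) (/ INR (n - 1)) = 1).
    { unfold Rpower, ln. destruct (Rlt_dec 0 _) as [Hp|]; [|rewrite Rmult_0_r; apply exp_0]. exfalso.
      assert (0 < wh - 1); [|lra]. apply (Rmult_lt_reg_r (/ INR (n - 1))); [apply Rinv_0_lt_compat|]; lra. }
    rewrite H2. lra.
  - assert (Hq : 0 < wh ^ (n - 1)) by (apply pow_lt; lra).
    rewrite (pow_pred n) in H by lia.
    assert (Hr : Rpower ((wh - 1) / INR (n - 1)) (/ INR (n - 1)) <= w / wh).
    { apply Rpower_root_le; [lia|apply Rdiv_lt_0_compat; lra|apply Rdiv_lt_0_compat; lra|].
      rewrite pow_div. apply (Rmult_le_reg_r (INR (n - 1) * wh ^ (n - 1))); [nra|].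
      field_simplify; try lra; nra. }
    apply (Rmult_le_compat_l wh) in Hr; [|lra]. replace (wh * (w / wh)) with w in Hr by (field; lra). exact Hr.
Qed.

Lemma lambda_bound_of_poly n l lh : (2 <= n)%nat -> 0 <= lh -> lh <= l ->
  lh * l ^ (n - 1) + INR (n - 1) * lh ^ n <= l ^ (n - 1) ->
  l >= lh * Rpower (INR (n - 1) * lh / (1 - lh)) (/ INR (n - 1)).
Proof.
  intros Hn H0 Hl H. apply Rle_ge.
  assert (Hn1 : 1 <= INR (n - 1)) by (apply (le_INR 1); lia).
  destruct H0 as [Hp|<-]; [|lra].
  assert (Hq : 0 < l ^ (n - 1)) by (apply pow_lt; lra).
  assert (Hq' : 0 < lh ^ (n - 1)) by (apply pow_lt; lra).
  rewrite (pow_pred n) in H by lia.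
  assert (Hlt1 : lh < 1).
  { apply Rnot_le_lt. intros H1. assert (0 < INR (n - 1) * (lh * lh ^ (n - 1))) by (apply Rmult_lt_0_compat; nra).
    nra. }
  assert (Hr : Rpower (INR (n - 1) * lh / (1 - lh)) (/ INR (n - 1)) <= l / lh).
  { apply Rpower_root_le; [lia|apply Rdiv_lt_0_compat; nra|apply Rdiv_lt_0_compat; lra|].
    rewrite pow_div. apply (Rmult_le_reg_r ((1 - lh) * lh ^ (n - 1))); [nra|].
    field_simplify; try lra; nra. }
  apply (Rmult_le_compat_l lh) in Hr; [|lra]. replace (lh * (l / lh)) with l in Hr by (field; lra). exact Hr.
Qed.

Lemma w_set_eq n zeta j : w_set n zeta j = approx_set n (height n) (fun v => Rabs (linform n zeta v)) j.
Proof. reflexivity. Qed.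

Lemma what_set_eq n zeta j :
  what_set n zeta j = unif_approx_set n (height n) (fun v => Rabs (linform n zeta v)) j.
Proof. reflexivity. Qed.

Lemma lambda_set_eq n zeta j : lambda_set n zeta j = approx_set n x_height (simdist n zeta) j.
Proof. reflexivity. Qed.

Lemma lhat_set_eq n zeta j : lhat_set n zeta j = unif_approx_set n x_height (simdist n zeta) j.
Proof. reflexivity. Qed.

Lemma linform_chain_det_often n zeta s : (1 <= n)%nat ->
  best_chain n (height n) (fun v => Rabs (linform n zeta v)) s -> often_indep_blocks n (S n) s ->
  forall K, exists k, (K <= k)%nat /\ 1 <= INR (Factorial.fact (S n)) *
    Rabs (linform n zeta (s k)) * height n (s (S k)) * height n (s (k + n)%nat) ^ (n - 1).
Proof.
  intros Hn Hs Hinf K. destruct (Hinf K) as [k [Hk Hl]]. exists k. split; auto.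
  destruct n as [|m]; [lia|].
  assert (H := DeterminantBounds.linform_det_bound m zeta (fun j => s (k + j)%nat) Hl).
  cbv beta in H. rewrite Nat.add_0_r, Nat.add_1_r in H. replace (S m - 1)%nat with m by lia.
  apply H; intros j j' Hj; [apply (chain_ht_mono _ _ _ _ Hs)|apply (chain_er_anti _ _ _ _ Hs)]; lia.
Qed.

Lemma sim_chain_det_often n zeta s : (1 <= n)%nat ->
  best_chain n x_height (simdist n zeta) s -> often_indep_blocks n (S n) s ->
  forall K, exists k, (K <= k)%nat /\ 1 <= INR (Factorial.fact (S n)) * x_height (s (k + n)%nat) *
    simdist n zeta (s (k + (n - 1))%nat) * simdist n zeta (s k) ^ (n - 1).
Proof.
  intros Hn Hs Hinf K. destruct (Hinf K) as [k [Hk Hl]]. exists k. split; auto.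
  destruct n as [|m]; [lia|].
  assert (H := DeterminantBounds.simdist_det_bound m zeta (fun j => s (k + j)%nat) Hl).
  cbv beta in H. rewrite Nat.add_0_r in H. replace (S m - 1)%nat with m by lia.
  apply H; intros j j' Hj;
    [apply (chain_ht_mono _ _ _ _ Hs (k + j)%nat (k + j')%nat)|apply (chain_er_anti _ _ _ _ Hs)]; lia.
Qed.

Lemma w3_lower_bound n zeta w wh w3 : (2 <= n)%nat -> Q_lin_indep_1 n zeta ->
  is_lub (w_set n zeta 1) w -> is_lub (what_set n zeta 1) wh -> is_lub (w_set n zeta 3) w3 ->
  wh ^ 2 / w <= w3.
Proof.
  intros Hn HQ Hw Hwh Hw3. rewrite w_set_eq in Hw, Hw3. rewrite what_set_eq in Hwh.
  destruct (ex_linform_best_chain n zeta Hn HQ) as [s Hs].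
  rewrite <- (pow_1 w).
  apply (chain_block_lub n _ _ s Hs w wh 3 w3 ltac:(lia) Hw Hwh (linform_unif_exp0 n zeta)); auto.
  apply (linform_chain_often_indep_triples n zeta); auto.
Qed.

Lemma lambda3_lower_bound n zeta l lh l3 : (2 <= n)%nat -> Q_lin_indep_1 n zeta ->
  is_lub (lambda_set n zeta 1) l -> is_lub (lhat_set n zeta 1) lh -> is_lub (lambda_set n zeta 3) l3 ->
  lh ^ 2 / l <= l3.
Proof.
  intros Hn HQ Hl Hlh Hl3. rewrite lambda_set_eq in Hl, Hl3. rewrite lhat_set_eq in Hlh.
  destruct (proj1 Hlh 0 (sim_unif_exp0 n zeta)) as [Hp|<-].
  - assert (Hgood := arbitrarily_good_of_unif_lub n zeta lh Hlh Hp).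
    destruct (ex_sim_best_chain n zeta ltac:(lia) HQ Hgood) as [s Hs].
    rewrite <- (pow_1 l).
    apply (chain_block_lub n _ _ s Hs l lh 3 l3 ltac:(lia) Hl Hlh (sim_unif_exp0 n zeta)); auto.
    apply (sim_chain_often_indep_triples n zeta); auto.
  - replace (0 ^ 2 / l) with 0 by (unfold Rdiv; simpl; ring). apply (proj1 Hl3), sim_exps3_zero; auto.
Qed.

Lemma w_exps_lower_bounds n zeta bv w wh : (2 <= n)%nat -> Q_lin_indep_1 n zeta ->
  best_approx_seq n zeta bv -> often_indep_blocks n (S n) bv ->
  is_lub (w_set n zeta 1) w -> is_lub (what_set n zeta 1) wh ->
  (forall (i : nat) (wi : R), (1 <= i <= S n)%nat -> is_lub (w_set n zeta i) wi ->
     powerRZ wh (Z.of_nat i - 1) / powerRZ w (Z.of_nat i - 2) <= wi) /\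
  wh * Rpower ((wh - 1) / INR (n - 1)) (/ INR (n - 1)) <= w.
Proof.
  intros Hn HQ Hbv Hinf Hw Hwh. rewrite w_set_eq in *. rewrite what_set_eq in Hwh.
  assert (Hs := best_approx_seq_chain n zeta bv HQ Hbv).
  assert (H0 := linform_unif_exp0 n zeta).
  split; [apply (chain_exps_lub_ge n _ _ bv Hs w wh); auto|].
  apply w_bound_of_poly; auto; [apply (proj1 Hwh), H0|eapply unif_lub_le_lub; eauto|].
  apply (chain_w_poly_bound n _ _ bv Hs w wh (INR (Factorial.fact (S n)))); auto; [lia| |].
  - apply lt_0_INR, Factorial.lt_O_fact.
  - apply linform_chain_det_often; auto; lia.
Qed.

Lemma lambda_exps_lower_bounds n zeta bu l lh : (2 <= n)%nat -> Q_lin_indep_1 n zeta ->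
  sim_best_approx_seq n zeta bu -> often_indep_blocks n (S n) bu ->
  is_lub (lambda_set n zeta 1) l -> is_lub (lhat_set n zeta 1) lh ->
  (forall (i : nat) (li : R), (1 <= i <= S n)%nat -> is_lub (lambda_set n zeta i) li ->
     powerRZ lh (Z.of_nat i - 1) / powerRZ l (Z.of_nat i - 2) <= li) /\
  l >= lh * Rpower (INR (n - 1) * lh / (1 - lh)) (/ INR (n - 1)).
Proof.
  intros Hn HQ Hbu Hinf Hl Hlh. rewrite lambda_set_eq in *. rewrite lhat_set_eq in Hlh.
  assert (Hs := sim_best_approx_seq_chain n zeta bu ltac:(lia) HQ Hbu).
  assert (H0 := sim_unif_exp0 n zeta).
  split; [apply (chain_exps_lub_ge n _ _ bu Hs l lh); auto|].
  apply lambda_bound_of_poly; auto; [apply (proj1 Hlh), H0|eapply unif_lub_le_lub; eauto|].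
  apply (chain_lambda_poly_bound n _ _ bu Hs l lh (INR (Factorial.fact (S n)))); auto; [lia| |].
  - apply lt_0_INR, Factorial.lt_O_fact.
  - apply sim_chain_det_often; auto; lia.
Qed.

Theorem theorem4p1 (n : nat) (zeta : nat -> R) :
  (2 <= n)%nat -> Q_lin_indep_1 n zeta ->
  (* (i) *)
  (forall w wh w3 : R,
     is_lub (w_set n zeta 1) w -> is_lub (what_set n zeta 1) wh ->
     is_lub (w_set n zeta 3) w3 ->
     wh ^ 2 / w <= w3) /\
  (* (ii) *)
  ((exists bv : nat -> zvec, best_approx_seq n zeta bv /\
      forall K : nat, exists k : nat, (K <= k)%nat /\
        lin_indep n (S n) (fun m => bv (k + m)%nat)) ->
   forall w wh : R,
     is_lub (w_set n zeta 1) w -> is_lub (what_set n zeta 1) wh ->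
     (forall (i : nat) (wi : R), (1 <= i <= S n)%nat ->
        is_lub (w_set n zeta i) wi ->
        powerRZ wh (Z.of_nat i - 1) / powerRZ w (Z.of_nat i - 2) <= wi) /\
     wh * Rpower ((wh - 1) / INR (n - 1)) (/ INR (n - 1)) <= w) /\
  (* (iii) *)
  (forall l lh l3 : R,
     is_lub (lambda_set n zeta 1) l -> is_lub (lhat_set n zeta 1) lh ->
     is_lub (lambda_set n zeta 3) l3 ->
     lh ^ 2 / l <= l3) /\
  (* (iv) *)
  ((exists bu : nat -> zvec, sim_best_approx_seq n zeta bu /\
      forall K : nat, exists k : nat, (K <= k)%nat /\
        lin_indep n (S n) (fun m => bu (k + m)%nat)) ->
   forall l lh : R,
     is_lub (lambda_set n zeta 1) l -> is_lub (lhat_set n zeta 1) lh ->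
     (forall (i : nat) (li : R), (1 <= i <= S n)%nat ->
        is_lub (lambda_set n zeta i) li ->
        powerRZ lh (Z.of_nat i - 1) / powerRZ l (Z.of_nat i - 2) <= li) /\
     l >= lh * Rpower (INR (n - 1) * lh / (1 - lh)) (/ INR (n - 1))).
Proof.
  intros Hn HQ. split; [|split; [|split]].
  - intros w wh w3. apply w3_lower_bound; auto.
  - intros [bv [Hbv Hinf]] w wh. apply (w_exps_lower_bounds n zeta bv); auto.
  - intros l lh l3. apply lambda3_lower_bound; auto.
  - intros [bu [Hbu Hinf]] l lh. apply (lambda_exps_lower_bounds n zeta bu); auto.
Qed.
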